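(* Let $u$ be a smooth solution of the problem below on $[0,T)$ with smooth initial data $u_0$, under either periodic or Dirichlet boundary conditions, and let $\eta$ be the solution of $\dot\eta(t)=\bar{\mathcal K}_0(t)^{-2}$, $\eta(0)=0$. Then for all $t\in[0,T)$ and $\alpha\in[0,1]$, $$u_{xx}(\gamma(\alpha,t),t)=u_0''(\alpha)\,\gamma_\alpha(\alpha,t)=\frac{u_0''(\alpha)}{\mathcal J(\alpha,t)}\left(\int_0^1\frac{d\beta}{\mathcal J(\beta,t)}\right)^{-1},$$ and $$u_{xxx}(\gamma(\alpha,t),t)=u_0'''(\alpha)+\eta(t)\,\frac{u_0''(\alpha)^2}{\mathcal J(\alpha,t)}.$$ In particular, as long as the solution exists, the sign of $u_{xx}$ along each Lagrangian trajectory equals the sign of $u_0''(\alpha)$ (the initial concavity profile is preserved).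
   Context: The problem: $u_{xt}+u u_{xx}-u_x^2=-2\int_0^1 u_x^2\,dx$ for $t>0$, $x\in[0,1]$, $u(x,0)=u_0(x)$, with either periodic boundary conditions $u(0,t)=u(1,t)$, $u_x(0,t)=u_x(1,t)$ or Dirichlet boundary conditions $u(0,t)=u(1,t)=0$. The Lagrangian flow $\gamma(\alpha,t)$ is defined by $\dot\gamma(\alpha,t)=u(\gamma(\alpha,t),t)$, $\gamma(\alpha,0)=\alpha$, and $\gamma_\alpha=\partial\gamma/\partial\alpha$. Given $\eta(t)$, define $\mathcal J(\alpha,t)=1-\eta(t)u_0'(\alpha)$ and $\bar{\mathcal K}_0(t)=\int_0^1\mathcal J(\alpha,t)^{-1}\,d\alpha$. *)

From Stdlib Require Import Reals Lra.
Open Scope R_scope.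

Definition deriv_within (S : R -> Prop) (f : R -> R) (x l : R) : Prop :=
  forall eps, 0 < eps -> exists delta, 0 < delta /\
    forall h, h <> 0 -> Rabs h < delta -> S (x + h) ->
      Rabs ((f (x + h) - f x) / h - l) < eps.

Definition Rint (f : R -> R) (a b I : R) : Prop :=
  exists pr : Riemann_integrable f a b, RiemannInt pr = I.

Definition cont2_lt (T : R) (f : R -> R -> R) (x t : R) : Prop :=
  forall eps, 0 < eps -> exists delta, 0 < delta /\
    forall x' t', t' < T -> Rabs (x' - x) < delta -> Rabs (t' - t) < delta ->
      Rabs (f x' t' - f x t) < eps.

(* u is C^infinity on the open set R x (-oo, T), with D i j = d_x^i d_t^j u. *)
Definition smooth_derivs (T : R) (u : R -> R -> R)
    (D : nat -> nat -> R -> R -> R) : Prop :=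
  (forall x t, D O O x t = u x t) /\
  (forall i j x t, t < T ->
     derivable_pt_lim (fun y => D i j y t) x (D (S i) j x t)) /\
  (forall i j x t, t < T ->
     derivable_pt_lim (fun s => D i j x s) t (D i (S j) x t)) /\
  (forall i j x t, t < T -> cont2_lt T (D i j) x t).

Inductive BC := Periodic | Dirichlet.

Definition bc_holds (bc : BC) (T : R) (u : R -> R -> R) : Prop :=
  match bc with
  | Periodic => forall x t, t < T -> u (x + 1) t = u x t
  | Dirichlet => forall t, 0 <= t < T -> u 0 t = 0 /\ u 1 t = 0
  end.

From Stdlib Require Import ZArith Reals Lra Psatz Classical.
From Coquelicot Require Import Coquelicot.
Open Scope R_scope.

(** Fix t0 < T and follow a trajectory gamma(a,.).
   - Differentiating the PDE in x gives, along trajectories,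
       (u_x)' = u_x^2 - 2I,  (u_xx)' = u_x u_xx,  (u_xxx)' = u_xx^2.
   - Hence  P(a,s) = exp (- int_0^s u_x(gamma(a,r),r) dr) = 1/gamma_alpha  solves
     the linear equation  P'' = 2 I P  with  P(0) = 1,  P'(0) = -u0'(a),  so P is
     affine in u0'(a):  P(a,s) = y1(s) - u0'(a) y2(s)  (Wronskian y1 y2' - y1' y2 = 1),
     and  u_xx(gamma(a,s),s) P(a,s) = u0''(a).
   - gamma(1,s) - gamma(0,s) = 1 gives  int_0^1 db / P(b,s) = 1, which identifies
     y1 = Kbar(et) for  et = y2/y1;  et' = 1/y1^2, so et solves the ODE of eta and
     uniqueness (the right-hand side is locally Lipschitz) yields eta = et,
     i.e.  P(a,s) = Kbar(s) J(a,s).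
   - Finally  u_xxx(gamma) - u0''^2 eta/J  has zero time derivative. *)

Lemma continuity_pt_intro (f : R -> R) x :
  (forall eps, 0 < eps -> exists delta, 0 < delta /\
     forall y, Rabs (y - x) < delta -> Rabs (f y - f x) < eps) ->
  continuity_pt f x.
Proof.
  intros H eps Heps. destruct (H eps Heps) as [d [Hd Hf]].
  exists d; split; auto. intros y [_ Hy]. apply Hf. exact Hy.
Qed.

Lemma continuity_pt_elim (f : R -> R) x : continuity_pt f x ->
  forall eps, 0 < eps -> exists delta, 0 < delta /\
     forall y, Rabs (y - x) < delta -> Rabs (f y - f x) < eps.
Proof.
  intros H eps He. destruct (H eps He) as [d [Hd Hf]].
  exists d; split; auto. intros y Hy.
  destruct (Req_dec y x) as [->|Hne].
  - unfold Rminus; rewrite Rplus_opp_r, Rabs_R0; auto.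
  - apply Hf. split; [split; [exact I| auto] | exact Hy].
Qed.

Lemma derivable_pt_lim_intro (f : R -> R) x l :
  (forall eps, 0 < eps -> exists delta, 0 < delta /\ forall h, h <> 0 ->
     Rabs h < delta -> Rabs ((f (x + h) - f x) / h - l) < eps) ->
  derivable_pt_lim f x l.
Proof.
  intros H eps He. destruct (H eps He) as [d [Hd Hf]].
  exists (mkposreal d Hd). exact Hf.
Qed.

Lemma derivable_pt_lim_continuous f x l :
  derivable_pt_lim f x l -> continuity_pt f x.
Proof. intros H. apply derivable_continuous_pt. exists l. exact H. Qed.

Lemma continuity_pt_cst (c x : R) : continuity_pt (fun _ => c) x.
Proof. apply continuity_pt_const. intros a b; auto. Qed.

Lemma derivable_pt_lim_exp_comp f x l : derivable_pt_lim f x l ->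
  derivable_pt_lim (fun y => exp (f y)) x (exp (f x) * l).
Proof.
  intros; apply (derivable_pt_lim_comp f exp); auto. apply derivable_pt_lim_exp.
Qed.

Lemma derivable_pt_lim_exp_affine k a x :
  derivable_pt_lim (fun y => exp (k * (y - a))) x (exp (k * (x - a)) * k).
Proof.
  replace (exp (k * (x - a)) * k) with (exp (k * (x - a)) * (k * (1 - 0))) by ring.
  apply (derivable_pt_lim_exp_comp (fun y => k * (y - a))).
  apply (derivable_pt_lim_scal (fun y => y - a)).
  apply (derivable_pt_lim_minus (fun y => y) (fun _ => a));
    [apply derivable_pt_lim_id | apply derivable_pt_lim_const].
Qed.

Lemma derivable_pt_lim_comb f g h df dg dh al be x :
  derivable_pt_lim f x df -> derivable_pt_lim g x dg -> derivable_pt_lim h x dh ->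
  derivable_pt_lim (fun y => f y - al * g y - be * h y) x (df - al * dg - be * dh).
Proof.
  intros Hf Hg Hh.
  apply (derivable_pt_lim_minus (fun y => f y - al * g y) (fun y => be * h y)).
  - apply (derivable_pt_lim_minus f (fun y => al * g y)); auto.
    apply (derivable_pt_lim_scal g); auto.
  - apply (derivable_pt_lim_scal h); auto.
Qed.

Lemma continuity_pt_comb f g h al be x :
  continuity_pt f x -> continuity_pt g x -> continuity_pt h x ->
  continuity_pt (fun y => f y - al * g y - be * h y) x.
Proof.
  intros Hf Hg Hh.
  apply (continuity_pt_minus (fun y => f y - al * g y) (fun y => be * h y)).
  - apply (continuity_pt_minus f (fun y => al * g y)); auto.
    apply (continuity_pt_scal g); auto.
  - apply (continuity_pt_scal h); auto.
Qed.

Lemma derivable_pt_lim_ext_ball f g x l r : 0 < r -> (forall y, Rabs (y - x) < r -> f y = g y) ->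
  derivable_pt_lim f x l -> derivable_pt_lim g x l.
Proof.
  intros Hr E H eps He. destruct (H eps He) as [d H'].
  assert (Hm : 0 < Rmin d r) by (apply Rmin_pos; [apply cond_pos|auto]).
  exists (mkposreal _ Hm). simpl. intros h H1 H2.
  rewrite <- !E.
  - apply H'; auto. apply Rlt_le_trans with (1 := H2); apply Rmin_l.
  - unfold Rminus; rewrite Rplus_opp_r, Rabs_R0; auto.
  - replace (x + h - x) with h by ring. apply Rlt_le_trans with (1 := H2); apply Rmin_r.
Qed.

Lemma mean_value f df a b : a < b ->
  (forall x, a < x < b -> derivable_pt_lim f x (df x)) ->
  (forall x, a <= x <= b -> continuity_pt f x) ->
  exists c, a < c < b /\ f b - f a = df c * (b - a).
Proof.
  intros Hab Hd Hc.
  pose (prf := fun c (P : a < c < b) =>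
      exist (fun l => derivable_pt_abs f c l) (df c) (Hd c P) : derivable_pt f c).
  pose (prid := fun c (P : a < c < b) => derivable_pt_id c).
  destruct (MVT f id a b prf prid Hab Hc
     (fun c _ => derivable_continuous_pt _ _ (derivable_pt_id c))) as [c [P HP]].
  exists c; split; auto. unfold prf, prid in HP. rewrite derive_pt_id in HP.
  simpl in HP. unfold id in HP. nra.
Qed.

Lemma mean_value_between f df x y : (forall z, derivable_pt_lim f z (df z)) ->
  exists c, Rmin x y <= c <= Rmax x y /\ f y - f x = df c * (y - x).
Proof.
  intros Hd. apply MVT_gen.
  - intros z _. apply is_derive_Reals, Hd.
  - intros z _. apply derivable_pt_lim_continuous with (df z), Hd.
Qed.

Lemma nonincreasing_of_deriv f df a b : a <= b ->
  (forall x, a < x < b -> derivable_pt_lim f x (df x)) ->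
  (forall x, a < x < b -> df x <= 0) ->
  (forall x, a <= x <= b -> continuity_pt f x) -> f b <= f a.
Proof.
  intros Hab Hd Hn Hc. destruct (Req_dec a b) as [<-|Hne]; [lra|].
  destruct (mean_value f df a b) as [c [Hc1 Hc2]]; auto; [lra|].
  specialize (Hn c Hc1). nra.
Qed.

Lemma constant_of_deriv_zero f df a b : a <= b ->
  (forall x, a < x < b -> derivable_pt_lim f x (df x)) ->
  (forall x, a < x < b -> df x = 0) ->
  (forall x, a <= x <= b -> continuity_pt f x) -> f b = f a.
Proof.
  intros Hab Hd Hn Hc. apply Rle_antisym.
  - apply (nonincreasing_of_deriv f df a b); auto. intros x Hx; rewrite Hn; auto; lra.
  - assert (- f b <= - f a); [|lra].
    apply (nonincreasing_of_deriv (fun y => - f y) (fun y => - df y) a b); auto.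
    + intros x Hx. apply (derivable_pt_lim_opp f). auto.
    + intros x Hx; rewrite Hn; auto; lra.
    + intros x Hx. apply (continuity_pt_opp f). auto.
Qed.

Lemma deriv_zero_of_constant_01 (f : R -> R) x l c : derivable_pt_lim f x l ->
  0 <= x <= 1 -> (forall y, 0 <= y <= 1 -> f y = c) -> l = 0.
Proof.
  intros H Hx Hc. destruct (Req_dec l 0) as [|Hl]; auto. exfalso.
  assert (Hal : 0 < Rabs l) by (apply Rabs_pos_lt; auto).
  destruct (H (Rabs l) Hal) as [d Hd].
  set (k := Rmin (d / 2) (1 / 2)).
  assert (Hd0 : 0 < d) by apply cond_pos.
  assert (Hk : 0 < k) by (unfold k; apply Rmin_pos; lra).
  assert (Hk1 : k <= d / 2) by apply Rmin_l.
  assert (Hk2 : k <= 1 / 2) by apply Rmin_r.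
  assert (Hstep : forall h, h <> 0 -> Rabs h < d -> 0 <= x + h <= 1 -> False).
  { intros h Hh Hhd Hxh. specialize (Hd h Hh Hhd).
    rewrite (Hc (x + h)), (Hc x), Rminus_diag in Hd by lra.
    unfold Rdiv in Hd. rewrite Rmult_0_l, Rminus_0_l, Rabs_Ropp in Hd. lra. }
  destruct (Rle_dec x (1/2)).
  - apply (Hstep k); [lra | rewrite Rabs_right; lra | lra].
  - apply (Hstep (- k)); [lra | rewrite Rabs_left; lra | lra].
Qed.

Lemma gronwall_upper f df a b A L : a <= b -> 0 < L ->
  (forall x, a <= x <= b -> continuity_pt f x) ->
  (forall x, a < x < b -> derivable_pt_lim f x (df x)) ->
  (forall x, a < x < b -> df x <= A + L * f x) ->
  f b + A / L <= (f a + A / L) * exp (L * (b - a)).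
Proof.
  intros Hab HL Hc Hd Hb.
  set (g := fun x => (f x + A / L) * exp (- L * (x - a))).
  assert (Hg : g b <= g a).
  { apply (nonincreasing_of_deriv g (fun x => df x * exp (- L * (x - a)) +
        (f x + A / L) * (exp (- L * (x - a)) * - L))); auto.
    - intros x Hx. unfold g.
      apply (derivable_pt_lim_mult (fun y => f y + A / L) (fun y => exp (- L * (y - a)))).
      + rewrite <- (Rplus_0_r (df x)).
        apply (derivable_pt_lim_plus f (fun _ => A / L)); auto. apply derivable_pt_lim_const.
      + apply derivable_pt_lim_exp_affine.
    - intros x Hx. specialize (Hb x Hx). pose proof (exp_pos (- L * (x - a))).
      assert (df x - L * (f x + A / L) <= 0).
      { replace (L * (f x + A / L)) with (L * f x + A) by (field; lra). lra. }
      nra.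
    - intros x Hx. unfold g.
      apply (continuity_pt_mult (fun y => f y + A / L) (fun y => exp (- L * (y - a)))).
      + apply (continuity_pt_plus f (fun _ => A / L)); auto. apply continuity_pt_cst.
      + apply derivable_pt_lim_continuous with (exp (- L * (x - a)) * - L).
        apply derivable_pt_lim_exp_affine. }
  unfold g in Hg. rewrite Rminus_diag, Rmult_0_r, exp_0, Rmult_1_r in Hg.
  pose proof (exp_pos (L * (b - a))).
  assert (E : exp (- L * (b - a)) * exp (L * (b - a)) = 1).
  { rewrite <- exp_plus. replace (- L * (b - a) + L * (b - a)) with 0 by ring. apply exp_0. }
  apply Rmult_le_compat_r with (r := exp (L * (b - a))) in Hg; [|lra].
  rewrite Rmult_assoc, E, Rmult_1_r in Hg. exact Hg.
Qed.

Lemma gronwall_lower f df a b L : a <= b -> 0 < L ->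
  (forall x, a <= x <= b -> continuity_pt f x) ->
  (forall x, a < x < b -> derivable_pt_lim f x (df x)) ->
  (forall x, a < x < b -> - (L * f x) <= df x) ->
  f a * exp (- L * (b - a)) <= f b.
Proof.
  intros Hab HL Hc Hd Hb.
  set (g := fun x => - (f x * exp (L * (x - a)))).
  assert (Hg : g b <= g a).
  { apply (nonincreasing_of_deriv g (fun x => - (df x * exp (L * (x - a)) +
        f x * (exp (L * (x - a)) * L)))); auto.
    - intros x Hx. unfold g. apply (derivable_pt_lim_opp (fun y => f y * exp (L * (y - a)))).
      apply (derivable_pt_lim_mult f (fun y => exp (L * (y - a)))); auto.
      apply derivable_pt_lim_exp_affine.
    - intros x Hx. specialize (Hb x Hx). pose proof (exp_pos (L * (x - a))). nra.
    - intros x Hx. unfold g. apply (continuity_pt_opp (fun y => f y * exp (L * (y - a)))).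
      apply continuity_pt_mult; auto.
      apply derivable_pt_lim_continuous with (exp (L * (x - a)) * L).
      apply derivable_pt_lim_exp_affine. }
  unfold g in Hg. rewrite Rminus_diag, Rmult_0_r, exp_0, Rmult_1_r in Hg.
  pose proof (exp_pos (- L * (b - a))).
  assert (E : exp (L * (b - a)) * exp (- L * (b - a)) = 1).
  { rewrite <- exp_plus. replace (L * (b - a) + - L * (b - a)) with 0 by ring. apply exp_0. }
  assert (Hfa : f a <= f b * exp (L * (b - a))) by lra.
  apply Rmult_le_compat_r with (r := exp (- L * (b - a))) in Hfa; [|lra].
  rewrite Rmult_assoc, E, Rmult_1_r in Hfa. exact Hfa.
Qed.

(* Linear growth bound: if  |f'| <= A + L |f|  on (a,b), then
   |f b| <= (|f a| + A) exp ((2L+1)(b-a)).  Proved on  f^2  with [gronwall_upper]. *)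
Lemma gronwall_abs f df a b A L : a <= b -> 0 <= A -> 0 <= L ->
  (forall x, a <= x <= b -> continuity_pt f x) ->
  (forall x, a < x < b -> derivable_pt_lim f x (df x)) ->
  (forall x, a < x < b -> Rabs (df x) <= A + L * Rabs (f x)) ->
  Rabs (f b) <= (Rabs (f a) + A) * exp ((2 * L + 1) * (b - a)).
Proof.
  intros Hab HA HL Hc Hd Hb. set (K := 2 * L + 1).
  assert (G : f b * f b + A * A / K <= (f a * f a + A * A / K) * exp (K * (b - a))).
  { apply (gronwall_upper (fun x => f x * f x) (fun x => 2 * f x * df x)); auto; [unfold K; lra|..].
    - intros x Hx. apply continuity_pt_mult; auto.
    - intros x Hx. replace (2 * f x * df x) with (df x * f x + f x * df x) by ring.
      apply (derivable_pt_lim_mult f f); auto.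
    - intros x Hx. specialize (Hb x Hx).
      assert (Hfd : 2 * f x * df x <= 2 * (Rabs (f x) * Rabs (df x))).
      { rewrite <- Rabs_mult. pose proof (Rle_abs (f x * df x)). lra. }
      assert (Hsq : Rabs (f x) * Rabs (f x) = f x * f x).
      { rewrite <- Rabs_mult. apply Rabs_right. nra. }
      pose proof (Rabs_pos (f x)). pose proof (Rabs_pos (df x)).
      pose proof (Rle_0_sqr (Rabs (f x) - A)). unfold Rsqr in *. unfold K. nra. }
  assert (HK : 1 <= K) by (unfold K; lra).
  assert (HE : 1 <= exp (K * (b - a))) by (pose proof (exp_ineq1_le (K * (b - a))); nra).
  set (E := exp (K * (b - a))) in *.
  assert (HAK : A * A / K <= A * A).
  { unfold Rdiv. rewrite <- (Rmult_1_r (A * A)) at 2. apply Rmult_le_compat_l; [nra|].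
    rewrite <- Rinv_1. apply Rinv_le_contravar; lra. }
  assert (HAK0 : 0 <= A * A / K) by (apply Rdiv_le_0_compat; nra).
  assert (Hsq : (f b)² <= ((Rabs (f a) + A) * E)²).
  { pose proof (Rabs_pos (f a)).
    assert (Hfa : f a * f a = Rabs (f a) * Rabs (f a))
      by (rewrite <- Rabs_mult; symmetry; apply Rabs_right; nra).
    assert (H1 : f b * f b <= (f a * f a + A * A) * E).
    { apply Rle_trans with ((f a * f a + A * A / K) * E); [lra|].
      apply Rmult_le_compat_r; lra. }
    assert (H2 : f a * f a + A * A <= (Rabs (f a) + A) * (Rabs (f a) + A)) by nra.
    assert (H3 : E <= E * E) by nra.
    unfold Rsqr. apply Rle_trans with (1 := H1).
    apply Rle_trans with ((Rabs (f a) + A) * (Rabs (f a) + A) * E);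
      [apply Rmult_le_compat_r; lra|].
    replace ((Rabs (f a) + A) * E * ((Rabs (f a) + A) * E))
      with ((Rabs (f a) + A) * (Rabs (f a) + A) * (E * E)) by ring.
    apply Rmult_le_compat_l; [nra|lra]. }
  apply Rsqr_le_abs_0 in Hsq. rewrite (Rabs_right ((Rabs (f a) + A) * E)) in Hsq; [exact Hsq|].
  pose proof (Rabs_pos (f a)). nra.
Qed.

Lemma gronwall_nonvanishing f df a b L : a <= b -> 0 <= L ->
  (forall x, a <= x <= b -> continuity_pt f x) ->
  (forall x, a < x < b -> derivable_pt_lim f x (df x)) ->
  (forall x, a < x < b -> Rabs (df x) <= L * Rabs (f x)) ->
  f a <> 0 -> f b <> 0.
Proof.
  intros Hab HL Hc Hd Hb Ha Hfb.
  assert (G : f a * f a * exp (- (2 * L + 1) * (b - a)) <= f b * f b).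
  { apply (gronwall_lower (fun x => f x * f x) (fun x => 2 * f x * df x)); auto; [lra|..].
    - intros x Hx. apply continuity_pt_mult; auto.
    - intros x Hx. replace (2 * f x * df x) with (df x * f x + f x * df x) by ring.
      apply (derivable_pt_lim_mult f f); auto.
    - intros x Hx. specialize (Hb x Hx).
      assert (Hfd : - (2 * (Rabs (f x) * Rabs (df x))) <= 2 * f x * df x).
      { rewrite <- Rabs_mult. pose proof (Rle_abs (- (f x * df x))). rewrite Rabs_Ropp in *. lra. }
      assert (Hsq : Rabs (f x) * Rabs (f x) = f x * f x).
      { rewrite <- Rabs_mult. apply Rabs_right. nra. }
      pose proof (Rabs_pos (f x)). nra. }
  rewrite Hfb, Rmult_0_r in G.
  assert (0 < f a * f a) by (apply Rsqr_pos_lt; exact Ha).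
  pose proof (exp_pos (- (2 * L + 1) * (b - a))). nra.
Qed.

Lemma second_order_linear_zero (z dz q : R -> R) tau B : 0 <= tau -> 0 <= B ->
  (forall x, derivable_pt_lim z x (dz x)) -> (forall x, continuity_pt dz x) ->
  (forall x, 0 < x < tau -> derivable_pt_lim dz x (2 * q x * z x)) ->
  (forall x, 0 < x < tau -> Rabs (q x) <= B) -> z 0 = 0 -> dz 0 = 0 -> z tau = 0.
Proof.
  intros Ht HB Hz Hdzc Hdz Hq Z0 DZ0.
  assert (G : (z tau * z tau + dz tau * dz tau) + 0 / (1 + 2 * B) <=
     ((z 0 * z 0 + dz 0 * dz 0) + 0 / (1 + 2 * B)) * exp ((1 + 2 * B) * (tau - 0))).
  { apply (gronwall_upper (fun x => z x * z x + dz x * dz x)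
       (fun x => (dz x * z x + z x * dz x) + (2 * q x * z x * dz x + dz x * (2 * q x * z x)))
       0 tau 0 (1 + 2 * B)); try lra.
    - intros x _. apply (continuity_pt_plus (fun x => z x * z x) (fun x => dz x * dz x)).
      + apply (continuity_pt_mult z z); apply derivable_pt_lim_continuous with (dz x); auto.
      + apply (continuity_pt_mult dz dz); auto.
    - intros x Hx. apply (derivable_pt_lim_plus (fun x => z x * z x) (fun x => dz x * dz x)).
      + apply (derivable_pt_lim_mult z z); auto.
      + apply (derivable_pt_lim_mult dz dz); auto.
    - intros x Hx. specialize (Hq x Hx). apply Rabs_le_between in Hq.
      pose proof (Rle_0_sqr (z x - dz x)). pose proof (Rle_0_sqr (z x + dz x)).
      pose proof (Rle_0_sqr (z x)). pose proof (Rle_0_sqr (dz x)).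
      unfold Rsqr in *. nra. }
  rewrite Z0, DZ0 in G. unfold Rdiv in G. rewrite !Rmult_0_l, !Rplus_0_r, Rmult_0_l in G.
  pose proof (Rle_0_sqr (z tau)). pose proof (Rle_0_sqr (dz tau)). unfold Rsqr in *.
  assert (Hz2 : z tau * z tau = 0) by lra.
  destruct (Rmult_integral _ _ Hz2); auto.
Qed.

Lemma real_induction (a b : R) (P : R -> Prop) : a <= b ->
  (forall c, a <= c <= b -> (forall s, a <= s < c -> P s) ->
     exists r, 0 < r /\ forall s, c <= s < c + r -> s <= b -> P s) ->
  forall s, a <= s <= b -> P s.
Proof.
  intros Hab Hstep.
  set (E := fun c => a <= c <= b /\ forall s, a <= s <= c -> P s).
  destruct (Hstep a (conj (Rle_refl a) Hab)) as [r0 [Hr0 H0]]. { intros s Hs; lra. }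
  assert (Ea : E a). { split; [lra|]. intros s Hs. apply H0; lra. }
  assert (Hb : bound E). { exists b. intros x [Hx _]. lra. }
  destruct (completeness E Hb (ex_intro _ a Ea)) as [m [Hub Hlub]].
  assert (Ham : a <= m) by (apply Hub; auto).
  assert (Hmb : m <= b) by (apply Hlub; intros x [Hx _]; lra).
  assert (Hbelow : forall s, a <= s < m -> P s).
  { intros s Hs. apply NNPP; intro HN.
    assert (m <= s); [|lra]. apply Hlub. intros x [Hx Hx2].
    destruct (Rle_dec x s); auto. exfalso; apply HN; apply Hx2; lra. }
  destruct (Hstep m (conj Ham Hmb) Hbelow) as [r [Hr Hm]].
  assert (Hmin1 : Rmin b (m + r/2) <= m + r/2) by apply Rmin_r.
  assert (Hmin2 : Rmin b (m + r/2) <= b) by apply Rmin_l.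
  assert (Hupto : forall s, a <= s <= Rmin b (m + r/2) -> P s).
  { intros s Hs. destruct (Rlt_dec s m).
    - apply Hbelow; lra.
    - apply Hm; lra. }
  assert (HE : E (Rmin b (m + r/2))).
  { split; [split|]; auto. apply Rmin_glb; lra. }
  assert (HH : Rmin b (m + r/2) <= m) by (apply Hub; auto).
  intros s Hs. apply Hupto. split; [lra|].
  destruct (Rle_dec b (m + r/2)).
  - rewrite Rmin_left by lra. lra.
  - rewrite Rmin_right in HH by lra. lra.
Qed.

Lemma compactness_bound (a b : R) (Q : R -> R -> Prop) : a <= b ->
  (forall y m m', Q y m -> m <= m' -> Q y m') ->
  (forall x, a <= x <= b -> exists m r, 0 < r /\
      forall y, a <= y <= b -> Rabs (y - x) < r -> Q y m) ->
  exists m, forall y, a <= y <= b -> Q y m.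
Proof.
  intros Hab Hmono Hloc.
  assert (H : forall c, a <= c <= b -> exists m, forall y, a <= y <= c -> Q y m).
  { apply (real_induction a b); auto.
    intros c Hc IH. destruct (Hloc c Hc) as [mc [r [Hr Hq]]].
    exists r; split; auto. intros s Hs Hsb.
    destruct (Req_dec c a) as [Eca|Nca].
    - exists mc. intros y Hy. apply Hq; [lra|]. apply Rabs_def1; lra.
    - set (s0 := Rmax a (c - r/2)).
      assert (Hs0 : a <= s0 < c).
      { unfold s0; split; [apply Rmax_l|]. apply Rmax_lub_lt; lra. }
      destruct (IH s0 Hs0) as [m0 Hm0].
      exists (Rmax m0 mc). intros y Hy.
      destruct (Rle_dec y s0).
      + apply Hmono with m0; [apply Hm0; lra | apply Rmax_l].
      + apply Hmono with mc; [|apply Rmax_r]. apply Hq; [lra|].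
        assert (c - r/2 <= s0) by apply Rmax_r. apply Rabs_def1; lra. }
  destruct (H b (conj Hab (Rle_refl b))) as [m Hm]. exists m; auto.
Qed.

Lemma bounds_at_left_limit (f : R -> R) c lo hi : continuity_pt f c -> 0 < c ->
  (forall s, 0 <= s < c -> lo <= f s <= hi) -> lo <= f c <= hi.
Proof.
  intros Hc Hc0 H.
  assert (Happrox : forall eps, 0 < eps -> lo - eps < f c < hi + eps).
  { intros eps He. destruct (continuity_pt_elim f c Hc eps He) as [d [Hd Hd']].
    set (s := Rmax 0 (c - d / 2)).
    assert (Hs : 0 <= s < c) by (unfold s, Rmax; destruct Rle_dec; lra).
    assert (Hsc : Rabs (s - c) < d) by (unfold s, Rmax; destruct Rle_dec; apply Rabs_def1; lra).
    specialize (Hd' s Hsc). specialize (H s Hs). apply Rabs_def2 in Hd'. lra. }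
  split; apply Rnot_lt_le; intros Hlt.
  - destruct (Happrox (lo - f c)); lra.
  - destruct (Happrox (f c - hi)); lra.
Qed.

(** The hypotheses of the theorem only
    control the flow for times in [0,T) and labels in [0,1]; composing with
    [clamp] turns such functions into functions on all of R. *)

Definition clamp (lo hi x : R) := Rmax lo (Rmin hi x).

Lemma clamp_in lo hi x : lo <= hi -> lo <= clamp lo hi x <= hi.
Proof. intros; unfold clamp, Rmax, Rmin; repeat destruct Rle_dec; lra. Qed.

Lemma clamp_id lo hi x : lo <= x <= hi -> clamp lo hi x = x.
Proof. intros; unfold clamp, Rmax, Rmin; repeat destruct Rle_dec; lra. Qed.

Lemma clamp_lip lo hi x y : lo <= hi ->
  Rabs (clamp lo hi x - clamp lo hi y) <= Rabs (x - y).
Proof.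
  intros; unfold clamp, Rmax, Rmin; repeat destruct Rle_dec;
  unfold Rabs; repeat destruct Rcase_abs; lra.
Qed.

Lemma clamp_cont lo hi x : lo <= hi -> continuity_pt (clamp lo hi) x.
Proof.
  intros H. apply continuity_pt_intro. intros eps He. exists eps; split; auto.
  intros y Hy. eapply Rle_lt_trans; [apply clamp_lip; auto|]; auto.
Qed.

Lemma deriv_within_continuous (S : R -> Prop) f x l : deriv_within S f x l ->
  forall eps, 0 < eps -> exists delta, 0 < delta /\
    forall y, S y -> Rabs (y - x) < delta -> Rabs (f y - f x) < eps.
Proof.
  intros H eps He. destruct (H 1 Rlt_0_1) as [d [Hd H1]].
  assert (Hl : 0 < Rabs l + 1) by (pose proof (Rabs_pos l); lra).
  exists (Rmin d (eps / (Rabs l + 1))). split.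
  { apply Rmin_pos; auto. apply Rdiv_lt_0_compat; auto. }
  intros y Sy Hy.
  destruct (Req_dec y x) as [->|Hne].
  { unfold Rminus; rewrite Rplus_opp_r, Rabs_R0; auto. }
  assert (Hh : y - x <> 0) by lra.
  assert (Hyd : Rabs (y - x) < d) by (apply Rlt_le_trans with (1 := Hy); apply Rmin_l).
  assert (Hye : Rabs (y - x) < eps / (Rabs l + 1))
    by (apply Rlt_le_trans with (1 := Hy); apply Rmin_r).
  specialize (H1 (y - x) Hh Hyd). replace (x + (y - x)) with y in H1 by ring.
  specialize (H1 Sy).
  set (q := (f y - f x) / (y - x)) in *.
  assert (Hq : Rabs q <= Rabs l + 1).
  { replace q with ((q - l) + l) by ring.
    eapply Rle_trans; [apply Rabs_triang|]. lra. }
  replace (f y - f x) with (q * (y - x)) by (unfold q; field; auto).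
  rewrite Rabs_mult.
  apply Rle_lt_trans with ((Rabs l + 1) * Rabs (y - x)).
  { apply Rmult_le_compat_r; auto. apply Rabs_pos. }
  apply Rmult_lt_reg_l with (/ (Rabs l + 1)). { apply Rinv_0_lt_compat; auto. }
  rewrite <- Rmult_assoc, Rinv_l by lra. rewrite Rmult_1_l.
  unfold Rdiv in Hye. lra.
Qed.

Lemma deriv_within_interior (S : R -> Prop) f x l lo hi :
  (forall z, lo <= z <= hi -> S z) -> lo < x < hi ->
  deriv_within S f x l -> derivable_pt_lim f x l.
Proof.
  intros HS Hx H. apply derivable_pt_lim_intro. intros eps He.
  destruct (H eps He) as [d [Hd H1]].
  exists (Rmin d (Rmin (x - lo) (hi - x))). split.
  { apply Rmin_pos; auto. apply Rmin_pos; lra. }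
  intros h Hh Hhd. apply H1; auto.
  - apply Rlt_le_trans with (1 := Hhd); apply Rmin_l.
  - apply HS.
    assert (Rabs h < Rmin (x - lo) (hi - x)) by (apply Rlt_le_trans with (1 := Hhd); apply Rmin_r).
    assert (Rmin (x - lo) (hi - x) <= x - lo) by apply Rmin_l.
    assert (Rmin (x - lo) (hi - x) <= hi - x) by apply Rmin_r.
    assert (- Rabs h <= h <= Rabs h) by (unfold Rabs; destruct Rcase_abs; lra).
    lra.
Qed.

Lemma continuity_pt_clamp_comp (f : R -> R) lo hi : lo <= hi ->
  (forall x, lo <= x <= hi -> forall eps, 0 < eps -> exists delta, 0 < delta /\
     forall y, lo <= y <= hi -> Rabs (y - x) < delta -> Rabs (f y - f x) < eps) ->
  forall z, continuity_pt (fun s => f (clamp lo hi s)) z.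
Proof.
  intros Hlh H z. apply continuity_pt_intro. intros eps He.
  destruct (H (clamp lo hi z) (clamp_in lo hi z Hlh) eps He) as [d [Hd H1]].
  exists d; split; auto. intros y Hy. apply H1. apply clamp_in; auto.
  eapply Rle_lt_trans; [apply clamp_lip; auto|]. auto.
Qed.

Lemma derivable_pt_lim_clamp_comp (f : R -> R) lo hi x l : lo < x < hi -> derivable_pt_lim f x l ->
  derivable_pt_lim (fun s => f (clamp lo hi s)) x l.
Proof.
  intros Hx H. apply (derivable_pt_lim_ext_ball f _ x l (Rmin (x - lo) (hi - x))).
  { apply Rmin_pos; lra. }
  - intros y Hy. rewrite clamp_id; auto.
    assert (Rmin (x - lo) (hi - x) <= x - lo) by apply Rmin_l.
    assert (Rmin (x - lo) (hi - x) <= hi - x) by apply Rmin_r.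
    apply Rabs_def2 in Hy. lra.
  - auto.
Qed.

Lemma differentiable_of_partials (F Fx Ft : R -> R -> R) T x y :
  y < T ->
  (forall u v, v < T -> derivable_pt_lim (fun z => F z v) u (Fx u v)) ->
  cont2_lt T Fx x y ->
  derivable_pt_lim (fun z => F x z) y (Ft x y) ->
  differentiable_pt_lim F x y (Fx x y) (Ft x y).
Proof.
  intros HyT Hx Hc Ht eps.
  assert (He2 : 0 < eps / 2) by (destruct eps; simpl; lra).
  destruct (Hc (eps / 2) He2) as [d1 [Hd1 H1]].
  destruct (Ht (eps / 2) He2) as [d2 H2].
  assert (Hd : 0 < Rmin (Rmin d1 d2) (T - y)).
  { apply Rmin_pos; [apply Rmin_pos; auto; apply cond_pos| lra]. }
  exists (mkposreal _ Hd). simpl. intros u v Hu Hv.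
  assert (Hm1 : Rmin (Rmin d1 d2) (T - y) <= Rmin d1 d2) by apply Rmin_l.
  assert (Hm2 : Rmin (Rmin d1 d2) (T - y) <= T - y) by apply Rmin_r.
  assert (Hm3 : Rmin d1 d2 <= d1) by apply Rmin_l.
  assert (Hm4 : Rmin d1 d2 <= d2) by apply Rmin_r.
  assert (HvT : v < T) by (apply Rabs_def2 in Hv; lra).
  destruct (mean_value_between (fun z => F z v) (fun z => Fx z v) x u) as [c [Hcxu Hc2]].
  { intros; apply Hx; auto. }
  assert (Hc1 : Rabs (c - x) <= Rabs (u - x)).
  { apply Rabs_le_between_min_max. rewrite Rmin_comm, Rmax_comm. exact Hcxu. }
  assert (T1 : Rabs (F u v - F x v - Fx x y * (u - x)) <= eps / 2 * Rabs (u - x)).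
  { rewrite Hc2. replace (Fx c v * (u - x) - Fx x y * (u - x)) with
      ((Fx c v - Fx x y) * (u - x)) by ring.
    rewrite Rabs_mult. apply Rmult_le_compat_r; [apply Rabs_pos|].
    left. apply H1; auto; lra. }
  assert (T2 : Rabs (F x v - F x y - Ft x y * (v - y)) <= eps / 2 * Rabs (v - y)).
  { destruct (Req_dec v y) as [->|Hne].
    - unfold Rminus; rewrite !Rplus_opp_r, Rmult_0_r, Rplus_opp_r, Rabs_R0. lra.
    - specialize (H2 (v - y) ltac:(lra) ltac:(lra)).
      replace (y + (v - y)) with v in H2 by ring.
      replace (F x v - F x y - Ft x y * (v - y)) with
        (((F x v - F x y) / (v - y) - Ft x y) * (v - y)) by (field; lra).
      rewrite Rabs_mult. apply Rmult_le_compat_r; [apply Rabs_pos|]. lra. }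
  replace (F u v - F x y - (Fx x y * (u - x) + Ft x y * (v - y))) with
    ((F u v - F x v - Fx x y * (u - x)) + (F x v - F x y - Ft x y * (v - y))) by ring.
  eapply Rle_trans; [apply Rabs_triang|].
  assert (Rabs (u - x) <= Rmax (Rabs (u - x)) (Rabs (v - y))) by apply Rmax_l.
  assert (Rabs (v - y) <= Rmax (Rabs (u - x)) (Rabs (v - y))) by apply Rmax_r.
  destruct eps as [e He]; simpl in *. nra.
Qed.

Lemma chain_rule_2d (F Fx Ft : R -> R -> R) T (X : R -> R) dX s :
  s < T ->
  (forall u v, v < T -> derivable_pt_lim (fun z => F z v) u (Fx u v)) ->
  cont2_lt T Fx (X s) s ->
  derivable_pt_lim (fun z => F (X s) z) s (Ft (X s) s) ->
  derivable_pt_lim X s dX ->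
  derivable_pt_lim (fun z => F (X z) z) s (Fx (X s) s * dX + Ft (X s) s).
Proof.
  intros HsT Hx Hc Ht HX.
  replace (Fx (X s) s * dX + Ft (X s) s) with (Fx (X s) s * dX + Ft (X s) s * 1) by ring.
  apply (derivable_pt_lim_comp_2d F X (fun z => z)); auto.
  - apply (differentiable_of_partials F Fx Ft T); auto.
  - apply derivable_pt_lim_id.
Qed.

Lemma cont2_comp (F : R -> R -> R) T X Y s : Y s < T -> cont2_lt T F (X s) (Y s) ->
  continuity_pt X s -> continuity_pt Y s ->
  continuity_pt (fun z => F (X z) (Y z)) s.
Proof.
  intros HT Hc HX HY. apply continuity_pt_intro. intros eps He.
  destruct (Hc eps He) as [d [Hd H]].
  destruct (continuity_pt_elim X s HX d Hd) as [d1 [Hd1 H1]].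
  destruct (continuity_pt_elim Y s HY (Rmin d (T - Y s)) ltac:(apply Rmin_pos; lra)) as [d2 [Hd2 H2]].
  exists (Rmin d1 d2). split; [apply Rmin_pos; auto|]. intros z Hz.
  assert (Hz1 : Rabs (z - s) < d1) by (apply Rlt_le_trans with (1 := Hz); apply Rmin_l).
  assert (Hz2 : Rabs (z - s) < d2) by (apply Rlt_le_trans with (1 := Hz); apply Rmin_r).
  specialize (H1 z Hz1). specialize (H2 z Hz2).
  assert (Rmin d (T - Y s) <= d) by apply Rmin_l.
  assert (Rmin d (T - Y s) <= T - Y s) by apply Rmin_r.
  apply H; try lra. apply Rabs_def2 in H2. lra.
Qed.

Lemma cont2_bounded_near (F : R -> R -> R) T A B x : A <= B -> x < T ->
  (forall y s, s < T -> cont2_lt T F y s) ->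
  exists m r, 0 < r /\ forall s, Rabs (s - x) < r -> forall y, A <= y <= B -> Rabs (F y s) <= m.
Proof.
  intros HAB HxT Hc.
  destruct (compactness_bound A B (fun y m => 0 < m /\ forall s, Rabs (s - x) < / m ->
               Rabs (F y s) <= m)) as [m Hm]; auto.
  - intros y m m' [Hm0 Hm] Hmm. split; [lra|]. intros s Hs. apply Rle_trans with m; auto.
    apply Hm. apply Rlt_le_trans with (1 := Hs). apply Rinv_le_contravar; lra.
  - intros y0 Hy0.
    destruct (Hc y0 x HxT 1 Rlt_0_1) as [d [Hd H]].
    set (m := Rmax (Rabs (F y0 x) + 1) (Rmax (/ d) (/ (T - x)))).
    assert (Hm1 : Rabs (F y0 x) + 1 <= m) by apply Rmax_l.
    assert (Hm2 : / d <= m) by (eapply Rle_trans; [apply Rmax_l|apply Rmax_r]).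
    assert (Hm3 : / (T - x) <= m) by (eapply Rle_trans; [apply Rmax_r|apply Rmax_r]).
    assert (Hd' : 0 < / d) by (apply Rinv_0_lt_compat; auto).
    assert (HT' : 0 < / (T - x)) by (apply Rinv_0_lt_compat; lra).
    exists m, d. split; auto. intros y Hy Hyd. split; [lra|].
    intros s Hs.
    assert (Hs1 : / m <= d) by (rewrite <- (Rinv_inv d); apply Rinv_le_contravar; lra).
    assert (Hs2 : / m <= T - x)
      by (rewrite <- (Rinv_inv (T - x)); apply Rinv_le_contravar; lra).
    apply Rabs_def2 in Hs as Hs'.
    assert (Hlt : Rabs (F y s - F y0 x) < 1) by (apply H; try lra; apply Rabs_def1; lra).
    assert (Rabs (F y s) <= Rabs (F y s - F y0 x) + Rabs (F y0 x)).
    { replace (F y s) with ((F y s - F y0 x) + F y0 x) at 1 by ring. apply Rabs_triang. }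
    lra.
  - destruct (Hm A (conj (Rle_refl A) HAB)) as [Hm0 _].
    exists m, (/ m). split; [apply Rinv_0_lt_compat; auto|].
    intros s Hs y Hy. apply Hm; auto.
Qed.

Lemma cont2_bounded (F : R -> R -> R) T A B t0 : A <= B -> 0 <= t0 < T ->
  (forall y s, s < T -> cont2_lt T F y s) ->
  exists M, 0 < M /\ forall y s, A <= y <= B -> 0 <= s <= t0 -> Rabs (F y s) <= M.
Proof.
  intros HAB Ht0 Hc.
  destruct (compactness_bound 0 t0 (fun s m => forall y, A <= y <= B -> Rabs (F y s) <= m))
    as [m Hm]; [lra| | |].
  - intros s m m' H Hmm y Hy. apply Rle_trans with m; auto.
  - intros x Hx. destruct (cont2_bounded_near F T A B x) as [m [r [Hr Hb]]]; auto; [lra|].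
    exists m, r. split; auto.
  - exists (Rmax m 1). split; [apply Rlt_le_trans with 1; [lra|apply Rmax_r]|].
    intros y s Hy Hs. apply Rle_trans with m; [apply Hm; auto|apply Rmax_l].
Qed.

Lemma cont2_uniform_near_curve (F : R -> R -> R) T t0 (g : R -> R) : 0 <= t0 < T ->
  (forall y s, s < T -> cont2_lt T F y s) -> (forall s, continuity_pt g s) ->
  forall eps, 0 < eps -> exists delta, 0 < delta /\ forall s y, 0 <= s <= t0 ->
    Rabs (y - g s) < delta -> Rabs (F y s - F (g s) s) < eps.
Proof.
  intros Ht0 Hc Hg eps He.
  destruct (compactness_bound 0 t0 (fun s m => 0 < m /\ forall y, Rabs (y - g s) < / m ->
       Rabs (F y s - F (g s) s) < eps)) as [m Hm]; [lra| | |].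
  - intros s m m' [Hm0 Hm] Hmm. split; [lra|]. intros y Hy. apply Hm.
    apply Rlt_le_trans with (1 := Hy). apply Rinv_le_contravar; lra.
  - intros x Hx. assert (HxT : x < T) by lra.
    destruct (Hc (g x) x HxT (eps / 2) ltac:(lra)) as [d [Hd H]].
    destruct (continuity_pt_elim g x (Hg x) (d / 2) ltac:(lra)) as [dg [Hdg Hg1]].
    exists (2 / d), (Rmin dg d). split; [apply Rmin_pos; auto|].
    intros s Hs Hsx. split; [apply Rdiv_lt_0_compat; lra|].
    assert (Hsx1 : Rabs (s - x) < dg) by (apply Rlt_le_trans with (1 := Hsx); apply Rmin_l).
    assert (Hsx2 : Rabs (s - x) < d) by (apply Rlt_le_trans with (1 := Hsx); apply Rmin_r).
    specialize (Hg1 s Hsx1).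
    intros y Hy. replace (/ (2 / d)) with (d / 2) in Hy by (field; lra).
    assert (A1 : Rabs (F y s - F (g x) x) < eps / 2).
    { apply H; try lra; apply Rabs_def2 in Hy; apply Rabs_def2 in Hg1;
      apply Rabs_def1; lra. }
    assert (A2 : Rabs (F (g s) s - F (g x) x) < eps / 2).
    { apply H; try lra; apply Rabs_def2 in Hg1; apply Rabs_def1; lra. }
    replace (F y s - F (g s) s) with ((F y s - F (g x) x) - (F (g s) s - F (g x) x)) by ring.
    eapply Rle_lt_trans; [apply Rabs_triang|]. rewrite Rabs_Ropp. lra.
  - destruct (Hm 0 ltac:(lra)) as [Hm0 _]. exists (/ m). split; [apply Rinv_0_lt_compat; auto|].
    intros s y Hs Hy. apply Hm; auto.
Qed.

Lemma RInt_of_Rint f a b I : Rint f a b I -> RInt f a b = I.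
Proof. intros [pr Hpr]. rewrite <- Hpr. apply RInt_Reals. Qed.

Lemma ex_RInt_of_continuous (f : R -> R) a b : (forall y, continuity_pt f y) -> ex_RInt f a b.
Proof.
  intros H. apply (@ex_RInt_continuous R_CompleteNormedModule). intros z _. apply continuity_pt_filterlim. auto.
Qed.

Lemma RInt_derivable (f : R -> R) x : (forall y, continuity_pt f y) ->
  derivable_pt_lim (fun b => RInt f 0 b) x (f x).
Proof.
  intros H. apply is_derive_Reals.
  apply (@is_derive_RInt R_CompleteNormedModule f (fun b => RInt f 0 b) 0 x).
  - apply filter_forall. intros b. apply (@RInt_correct R_CompleteNormedModule).
    apply ex_RInt_of_continuous; auto.
  - apply continuity_pt_filterlim; auto.
Qed.

Lemma RInt_const01 (c : R) : RInt (fun _ => c) 0 1 = c.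
Proof. rewrite RInt_const. unfold scal; simpl. unfold mult; simpl. ring. Qed.

Lemma BC_cases (b : BC) : b = Periodic \/ b = Dirichlet.
Proof. destruct b; auto. Qed.

Section Concavity.
Variable bc : BC.
Variable T : R.
Variable u : R -> R -> R.
Variable D : nat -> nat -> R -> R -> R.
Variable gamma : R -> R -> R.
Variables eta Kbar : R -> R.
Hypothesis HT : 0 < T.
Hypothesis Hsm : smooth_derivs T u D.
Hypothesis Hbc : bc_holds bc T u.
Hypothesis Hpde : forall x t, 0 <= x <= 1 -> 0 <= t < T ->
     exists I, Rint (fun y => (D 1%nat 0%nat y t) ^ 2) 0 1 I /\
       D 1%nat 1%nat x t + u x t * D 2%nat 0%nat x t - (D 1%nat 0%nat x t) ^ 2
         = -2 * I.
Hypothesis Hg0 : forall a, 0 <= a <= 1 -> gamma a 0 = a.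
Hypothesis Hgd : forall a t, 0 <= a <= 1 -> 0 <= t < T ->
     deriv_within (fun s => 0 <= s < T) (fun s => gamma a s) t
       (u (gamma a t) t).
Hypothesis HK : forall t, 0 <= t < T ->
     Rint (fun b => / (1 - eta t * D 1%nat 0%nat b 0)) 0 1 (Kbar t).
Hypothesis Heta0 : eta 0 = 0.
Hypothesis Hetad : forall t, 0 <= t < T ->
     deriv_within (fun s => 0 <= s < T) eta t (/ (Kbar t) ^ 2).
Variable t0 : R.
Hypothesis Ht0 : 0 <= t0 < T.

Lemma D_u x s : D 0 0 x s = u x s.
Proof. destruct Hsm as [H _]. apply H. Qed.

Lemma D_dx i j x s : s < T -> derivable_pt_lim (fun y => D i j y s) x (D (S i) j x s).
Proof. destruct Hsm as [_ [H _]]. apply H. Qed.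

Lemma D_dt i j x s : s < T -> derivable_pt_lim (fun z => D i j x z) s (D i (S j) x s).
Proof. destruct Hsm as [_ [_ [H _]]]. apply H. Qed.

Lemma D_cont i j x s : s < T -> cont2_lt T (D i j) x s.
Proof. destruct Hsm as [_ [_ [_ H]]]. apply H. Qed.

Lemma D_periodic (Hp : bc = Periodic) i j x s : s < T -> D i j (x + 1) s = D i j x s.
Proof.
  assert (Hu : forall x s, s < T -> u (x + 1) s = u x s).
  { rewrite Hp in Hbc. exact Hbc. }
  revert j x s. induction i as [|i IHi].
  - induction j as [|j IHj]; intros x s Hs.
    + rewrite !D_u. auto.
    + apply (uniqueness_limite (fun z => D 0 j x z) s); [|apply D_dt; auto].
      apply (derivable_pt_lim_ext_ball (fun z => D 0 j (x + 1) z) _ s _ (T - s)); [lra| |apply D_dt; auto].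
      intros y Hy. apply IHj. apply Rabs_def2 in Hy; lra.
  - intros j x s Hs.
    apply (uniqueness_limite (fun y => D i j y s) x); [|apply D_dx; auto].
    assert (H1 := D_dx i j (x + 1) s Hs).
    apply derivable_pt_lim_intro. intros eps He. destruct (H1 eps He) as [d Hd].
    exists d. split; [apply cond_pos|]. intros h Hh Hhd.
    specialize (Hd h Hh Hhd). rewrite <- (IHi j x s Hs), <- (IHi j (x + h) s Hs).
    replace (x + h + 1) with (x + 1 + h) by ring. auto.
Qed.

Lemma D_periodic_nat (Hp : bc = Periodic) i j x s n : s < T -> D i j (x + INR n) s = D i j x s.
Proof.
  intros Hs. induction n as [|n IH].
  - simpl. rewrite Rplus_0_r. auto.
  - rewrite S_INR, <- Rplus_assoc, D_periodic; auto.
Qed.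

Lemma D_periodic_Z (Hp : bc = Periodic) i j x s z : s < T -> D i j (x + IZR z) s = D i j x s.
Proof.
  intros Hs. destruct z as [|p|p].
  - simpl. rewrite Rplus_0_r. auto.
  - replace (IZR (Z.pos p)) with (INR (Pos.to_nat p)).
    + apply D_periodic_nat; auto.
    + rewrite INR_IZR_INZ, positive_nat_Z. auto.
  - replace (IZR (Z.neg p)) with (- INR (Pos.to_nat p)).
    + rewrite <- (D_periodic_nat Hp i j (x + - INR (Pos.to_nat p)) s (Pos.to_nat p)); auto.
      f_equal. ring.
    + rewrite INR_IZR_INZ, positive_nat_Z, <- opp_IZR. auto.
Qed.

Lemma D_periodic_reduce (Hp : bc = Periodic) i j x s : s < T ->
  D i j x s = D i j (x - IZR (Int_part x)) s.
Proof.
  intros Hs. rewrite <- (D_periodic_Z Hp i j (x - IZR (Int_part x)) s (Int_part x)); auto.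
  f_equal; ring.
Qed.

Lemma frac_part_in_01 x : 0 <= x - IZR (Int_part x) <= 1.
Proof. destruct (base_Int_part x). lra. Qed.

Definition energy s := RInt (fun y => D 1 0 y s ^ 2) 0 1.

Lemma pde_01 x s : 0 <= x <= 1 -> 0 <= s < T ->
  D 1 1 x s + D 0 0 x s * D 2 0 x s - D 1 0 x s * D 1 0 x s = -2 * energy s.
Proof.
  intros Hx Hs. destruct (Hpde x s Hx Hs) as [I [HI HE]].
  apply RInt_of_Rint in HI. unfold energy. rewrite HI, D_u. rewrite <- HE. ring.
Qed.

Lemma pde_differentiate k c x s : 0 <= x <= 1 -> 0 <= s < T ->
  (forall y, 0 <= y <= 1 ->
     D (S k) 1 y s + D 0 0 y s * D (S (S k)) 0 y s - D 1 0 y s * D (S k) 0 y s = c) ->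
  D (S (S k)) 1 x s + D 0 0 x s * D (S (S (S k))) 0 x s - D 2 0 x s * D (S k) 0 x s = 0.
Proof.
  intros Hx Hs Hc.
  assert (Hd : derivable_pt_lim
     (fun y => D (S k) 1 y s + D 0 0 y s * D (S (S k)) 0 y s - D 1 0 y s * D (S k) 0 y s) x
     (D (S (S k)) 1 x s + (D 1 0 x s * D (S (S k)) 0 x s + D 0 0 x s * D (S (S (S k))) 0 x s) -
      (D 2 0 x s * D (S k) 0 x s + D 1 0 x s * D (S (S k)) 0 x s))).
  { apply (derivable_pt_lim_minus
      (fun y => D (S k) 1 y s + D 0 0 y s * D (S (S k)) 0 y s) (fun y => D 1 0 y s * D (S k) 0 y s)).
    - apply (derivable_pt_lim_plus (fun y => D (S k) 1 y s) (fun y => D 0 0 y s * D (S (S k)) 0 y s)).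
      + apply D_dx; lra.
      + apply (derivable_pt_lim_mult (fun y => D 0 0 y s) (fun y => D (S (S k)) 0 y s));
          apply D_dx; lra.
    - apply (derivable_pt_lim_mult (fun y => D 1 0 y s) (fun y => D (S k) 0 y s)); apply D_dx; lra. }
  pose proof (deriv_zero_of_constant_01 _ x _ c Hd Hx Hc). lra.
Qed.

(* In the Dirichlet case the flow must be shown to stay in [0,1], where the
   PDE holds; in the periodic case the PDE holds everywhere. *)
Definition InDomain x := bc = Dirichlet -> 0 <= x <= 1.

Lemma pde_along x s : InDomain x -> 0 <= s < T ->
  D 1 1 x s + D 0 0 x s * D 2 0 x s - D 1 0 x s * D 1 0 x s = -2 * energy s /\
  D 2 1 x s + D 0 0 x s * D 3 0 x s - D 1 0 x s * D 2 0 x s = 0 /\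
  D 3 1 x s + D 0 0 x s * D 4 0 x s - D 2 0 x s * D 2 0 x s = 0.
Proof.
  intros Hg Hs.
  assert (H01 : forall y, 0 <= y <= 1 ->
    D 1 1 y s + D 0 0 y s * D 2 0 y s - D 1 0 y s * D 1 0 y s = -2 * energy s /\
    D 2 1 y s + D 0 0 y s * D 3 0 y s - D 1 0 y s * D 2 0 y s = 0 /\
    D 3 1 y s + D 0 0 y s * D 4 0 y s - D 2 0 y s * D 2 0 y s = 0).
  { assert (H1 : forall y, 0 <= y <= 1 ->
      D 2 1 y s + D 0 0 y s * D 3 0 y s - D 1 0 y s * D 2 0 y s = 0).
    { intros y Hy. pose proof (pde_differentiate 0 (-2 * energy s) y s Hy Hs
        (fun z Hz => pde_01 z s Hz Hs)). simpl in *. lra. }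
    intros y Hy. split; [apply pde_01; auto|split; [apply H1; auto|]].
    apply (pde_differentiate 1 0 y s Hy Hs H1). }
  destruct (BC_cases bc) as [Ebc|Ebc].
  - rewrite !(D_periodic_reduce Ebc _ _ x s) by lra. apply H01, frac_part_in_01.
  - apply H01, Hg, Ebc.
Qed.

(* A neighbourhood of [0,1] in which a priori bounds on u are available
   (Dirichlet case); in the periodic case periodicity gives global bounds. *)
Definition InStrip y := bc = Dirichlet -> -1 <= y <= 2.

Lemma D_bounded i j : exists M, 0 < M /\ forall y s, InStrip y -> 0 <= s <= t0 -> Rabs (D i j y s) <= M.
Proof.
  destruct (BC_cases bc) as [Ebc|Ebc].
  - destruct (cont2_bounded (D i j) T 0 1 t0) as [M [HM HB]]; [lra|lra| |].
    { intros; apply D_cont; auto. }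
    exists M; split; [auto|]. intros y s _ Hs.
    rewrite (D_periodic_reduce Ebc i j y s) by lra. apply HB; auto. apply frac_part_in_01.
  - destruct (cont2_bounded (D i j) T (-1) 2 t0) as [M [HM HB]]; [lra|lra| |].
    { intros; apply D_cont; auto. }
    exists M; split; [auto|]. intros y s Hy Hs. apply HB; auto.
Qed.

(* A bound for u_x on the strip over [0,t0], as provided by [D_bounded]. *)
Variable M : R.
Hypothesis HM0 : 0 < M.
Hypothesis HM : forall y s, InStrip y -> 0 <= s <= t0 -> Rabs (D 1 0 y s) <= M.

Lemma u_lipschitz y1 y2 s : InStrip y1 -> InStrip y2 -> 0 <= s <= t0 ->
  Rabs (D 0 0 y1 s - D 0 0 y2 s) <= M * Rabs (y1 - y2).
Proof.
  intros H1 H2 Hs.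
  destruct (mean_value_between (fun y => D 0 0 y s) (fun y => D 1 0 y s) y2 y1) as [c [Hc1 Hc2]].
  { intros; apply D_dx; lra. }
  rewrite Hc2, Rabs_mult. apply Rmult_le_compat_r; [apply Rabs_pos|].
  apply HM; auto. intros E. specialize (H1 E). specialize (H2 E).
  assert (Rmin y2 y1 >= -1) by (unfold Rmin; destruct Rle_dec; lra).
  assert (Rmax y2 y1 <= 2) by (unfold Rmax; destruct Rle_dec; lra). lra.
Qed.

Definition traj a s := gamma a (clamp 0 t0 s).

Lemma traj_cont a : 0 <= a <= 1 -> forall s, continuity_pt (traj a) s.
Proof.
  intros Ha. unfold traj. apply (continuity_pt_clamp_comp (gamma a) 0 t0); [lra|].
  intros x Hx eps He.
  destruct (deriv_within_continuous _ _ _ _ (Hgd a x Ha ltac:(lra)) eps He) as [d [Hd H]].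
  exists d; split; auto. intros y Hy Hyx. apply H; auto. lra.
Qed.

Lemma traj_der a s : 0 <= a <= 1 -> 0 < s < t0 -> derivable_pt_lim (traj a) s (D 0 0 (traj a s) s).
Proof.
  intros Ha Hs. unfold traj. rewrite clamp_id by lra. rewrite D_u.
  apply derivable_pt_lim_clamp_comp; auto.
  apply (deriv_within_interior (fun z => 0 <= z < T) _ _ _ 0 t0); [intros; lra|lra|].
  apply Hgd; auto; lra.
Qed.

Lemma traj_0 a : 0 <= a <= 1 -> traj a 0 = a.
Proof. intros Ha. unfold traj. rewrite clamp_id by lra. auto. Qed.

Lemma along_cont i j (X : R -> R) s : (forall s, continuity_pt X s) ->
  continuity_pt (fun z => D i j (X z) (clamp 0 t0 z)) s.
Proof.
  intros HX. assert (Hc := clamp_in 0 t0 s ltac:(lra)).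
  apply (cont2_comp (D i j) T X (clamp 0 t0) s); auto.
  - lra.
  - apply D_cont; lra.
  - apply clamp_cont; lra.
Qed.

Lemma along_der i j (X : R -> R) dX s : 0 < s < t0 -> derivable_pt_lim X s dX ->
  derivable_pt_lim (fun z => D i j (X z) (clamp 0 t0 z)) s
     (D (S i) j (X s) s * dX + D i (S j) (X s) s).
Proof.
  intros Hs HX.
  apply (derivable_pt_lim_ext_ball (fun z => D i j (X z) z) _ s _ (Rmin s (t0 - s))).
  { apply Rmin_pos; lra. }
  - intros y Hy. rewrite clamp_id; auto.
    assert (Rmin s (t0 - s) <= s) by apply Rmin_l.
    assert (Rmin s (t0 - s) <= t0 - s) by apply Rmin_r.
    apply Rabs_def2 in Hy. lra.
  - apply (chain_rule_2d (D i j) (D (S i) j) (D i (S j)) T X dX s); auto.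
    + lra.
    + intros; apply D_dx; auto.
    + apply D_cont; lra.
    + apply D_dt; lra.
Qed.

Lemma traj_gronwall x1 x2 tau : 0 <= tau <= t0 ->
  (forall s, continuity_pt x1 s) -> (forall s, continuity_pt x2 s) ->
  (forall s, 0 < s < tau -> derivable_pt_lim x1 s (D 0 0 (x1 s) s)) ->
  (forall s, 0 < s < tau -> derivable_pt_lim x2 s (D 0 0 (x2 s) s)) ->
  (forall s, 0 <= s <= tau -> InStrip (x1 s) /\ InStrip (x2 s)) ->
  Rabs (x1 tau - x2 tau) <= Rabs (x1 0 - x2 0) * exp ((2 * M + 1) * (tau - 0)) /\
  (x1 0 <> x2 0 -> x1 tau <> x2 tau).
Proof.
  intros Htau Hc1 Hc2 Hd1 Hd2 HR.
  set (f := fun s => x1 s - x2 s).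
  assert (Hfc : forall s, 0 <= s <= tau -> continuity_pt f s)
    by (intros s _; apply continuity_pt_minus; auto).
  assert (Hfd : forall s, 0 < s < tau ->
    derivable_pt_lim f s (D 0 0 (x1 s) s - D 0 0 (x2 s) s))
    by (intros s Hs; apply (derivable_pt_lim_minus x1 x2); auto).
  assert (Hlip : forall s, 0 < s < tau ->
    Rabs (D 0 0 (x1 s) s - D 0 0 (x2 s) s) <= M * Rabs (f s)).
  { intros s Hs. destruct (HR s ltac:(lra)). apply u_lipschitz; auto; lra. }
  split.
  - pose proof (gronwall_abs f (fun s => D 0 0 (x1 s) s - D 0 0 (x2 s) s) 0 tau 0 M
      ltac:(lra) ltac:(lra) ltac:(lra) Hfc Hfd) as G.
    rewrite Rplus_0_r in G. apply G. intros s Hs. rewrite Rplus_0_l. auto.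
  - intros H0. assert (f tau <> 0); [|unfold f in *; lra].
    apply (gronwall_nonvanishing f (fun s => D 0 0 (x1 s) s - D 0 0 (x2 s) s) 0 tau M);
      auto; try lra. unfold f; lra.
Qed.

(* Under Dirichlet conditions the walls 0 and 1 are stationary trajectories;
   a trajectory staying in the strip is compared with them. *)
Lemma traj_vs_wall (Hd : bc = Dirichlet) a k tau : 0 <= a <= 1 -> (k = 0 \/ k = 1) ->
  0 <= tau <= t0 -> (forall s, 0 <= s <= tau -> InStrip (traj a s)) ->
  (a = k -> traj a tau = k) /\ (a <> k -> traj a tau <> k).
Proof.
  intros Ha Hk Htau HR.
  pose proof Hbc as Hb. rewrite Hd in Hb. simpl in Hb.
  destruct (traj_gronwall (traj a) (fun _ => k) tau) as [HU HN]; auto.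
  - apply traj_cont; auto.
  - intros; apply continuity_pt_cst.
  - intros; apply traj_der; auto; lra.
  - intros s Hs. rewrite D_u. destruct (Hb s ltac:(lra)) as [B0 B1].
    destruct Hk as [->| ->]; [rewrite B0|rewrite B1]; apply derivable_pt_lim_const.
  - intros s Hs. split; [apply HR; auto|]. intros _. destruct Hk; subst; lra.
  - rewrite traj_0 in HU, HN by auto. split; auto. intros ->.
    rewrite Rminus_diag, Rabs_R0, Rmult_0_l in HU.
    apply Rabs_le_between in HU. lra.
Qed.

(* A trajectory staying in the strip stays on the side of a wall where it
   started (by the intermediate value theorem, since it cannot meet the wall). *)
Lemma traj_wall_side (Hd : bc = Dirichlet) a k s : 0 <= a <= 1 -> (k = 0 \/ k = 1) ->
  0 <= s <= t0 -> (forall sg, 0 <= sg <= s -> InStrip (traj a sg)) ->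
  (a = k /\ traj a s = k) \/ 0 < (a - k) * (traj a s - k).
Proof.
  intros Ha Hk Hs HR.
  destruct (Req_dec a k) as [Hak|Hak].
  { left. split; auto. apply (traj_vs_wall Hd a k s); auto. }
  right. destruct (Rlt_dec 0 ((a - k) * (traj a s - k))) as [|Hneg]; auto. exfalso.
  assert (Hcross : forall z, 0 <= z <= s -> traj a z <> k).
  { intros z Hz. apply (traj_vs_wall Hd a k z); auto; try lra.
    intros sg Hsg. apply HR; lra. }
  assert (Hs0 : 0 < s).
  { destruct (Req_dec s 0) as [->|]; [|lra].
    rewrite traj_0 in Hneg by auto. exfalso. apply Hneg. nra. }
  destruct (IVT (fun z => - ((a - k) * (traj a z - k))) 0 s) as [z [Hz1 Hz2]]; auto.
  - intros z. apply continuity_pt_opp, continuity_pt_mult; [apply continuity_pt_cst|].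
    apply continuity_pt_minus; [apply traj_cont; auto|apply continuity_pt_cst].
  - rewrite traj_0 by auto. assert (0 < (a - k) * (a - k)) by (apply Rsqr_pos_lt; lra). lra.
  - assert ((a - k) * (traj a s - k) <> 0).
    { intros E. apply Rmult_integral in E. destruct E as [E|E]; [lra|].
      apply (Hcross s); lra. }
    lra.
  - apply (Hcross z Hz1). assert (E : (a - k) * (traj a z - k) = 0) by lra.
    apply Rmult_integral in E. destruct E; lra.
Qed.

(* Under Dirichlet conditions trajectories starting in [0,1] stay in [0,1]:
   by continuation in time, since up to a little beyond any time where they
   are in [0,1] they remain in the strip, and there they cannot cross a wall. *)
Lemma traj_confined (Hd : bc = Dirichlet) a : 0 <= a <= 1 ->
  forall s, 0 <= s <= t0 -> 0 <= traj a s <= 1.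
Proof.
  intros Ha. apply (real_induction 0 t0); [lra|].
  intros c Hc IH.
  assert (Pc : 0 <= traj a c <= 1).
  { destruct (Req_dec c 0) as [->|Hne].
    - rewrite traj_0; auto.
    - apply bounds_at_left_limit; auto. apply traj_cont; auto. lra. }
  destruct (continuity_pt_elim (traj a) c (traj_cont a Ha c) (1/2) ltac:(lra)) as [r [Hr Hcr]].
  exists r; split; auto. intros s Hs Hst.
  assert (HR : forall sg, 0 <= sg <= s -> InStrip (traj a sg)).
  { intros sg Hsg _. destruct (Rlt_dec sg c).
    - specialize (IH sg ltac:(lra)). lra.
    - assert (Rabs (sg - c) < r) by (apply Rabs_def1; lra).
      specialize (Hcr sg H). apply Rabs_def2 in Hcr. lra. }
  destruct (traj_wall_side Hd a 0 s) as [[_ H0]|H0]; auto; try lra;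
  destruct (traj_wall_side Hd a 1 s) as [[_ H1]|H1]; auto; try lra; nra.
Qed.

Lemma traj_regular a s : 0 <= a <= 1 -> 0 <= s <= t0 ->
  InDomain (traj a s) /\ InStrip (traj a s).
Proof.
  intros Ha Hs. split.
  - intros Hd. apply traj_confined; auto.
  - intros Hd. pose proof (traj_confined Hd a Ha s Hs). lra.
Qed.

(* The extreme trajectories remain one period apart:  gamma(1,s) - gamma(0,s) = 1.
   Periodic case: gamma(0,.) + 1 solves the same ODE from 1; Dirichlet case: the
   walls are fixed. *)
Lemma traj_span s : 0 <= s <= t0 -> traj 1 s - traj 0 s = 1.
Proof.
  intros Hs. destruct (BC_cases bc) as [Ebc|Ebc].
  - destruct (traj_gronwall (traj 1) (fun z => traj 0 z + 1) s Hs) as [HU _].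
    + apply traj_cont; lra.
    + intros z. apply continuity_pt_plus; [apply traj_cont; lra|apply continuity_pt_cst].
    + intros; apply traj_der; lra.
    + intros z Hz. rewrite (D_periodic Ebc) by lra. rewrite <- (Rplus_0_r (D 0 0 _ _)).
      apply (derivable_pt_lim_plus (traj 0) (fun _ => 1));
        [apply traj_der; lra|apply derivable_pt_lim_const].
    + intros z Hz. split; intros E; rewrite Ebc in E; discriminate.
    + rewrite !traj_0 in HU by lra.
      replace (1 - (0 + 1)) with 0 in HU by ring. rewrite Rabs_R0, Rmult_0_l in HU.
      apply Rabs_le_between in HU. lra.
  - assert (Hfix : forall k, (k = 0 \/ k = 1) -> traj k s = k).
    { intros k Hk. assert (Hk' : 0 <= k <= 1) by (destruct Hk; subst; lra).
      apply (traj_vs_wall Ebc k k s); auto.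
      intros z Hz. apply traj_regular; auto; lra. }
    rewrite (Hfix 1), (Hfix 0); auto. lra.
Qed.

(** The strain along a trajectory.  With  w = u_x  along the trajectory,
    W = int_0^s w,  E = exp W = gamma_alpha  and  P = exp (-W) = 1/gamma_alpha. *)

Definition w a s := D 1 0 (traj a s) (clamp 0 t0 s).
Definition W a s := RInt (w a) 0 s.
Definition P a s := exp (- W a s).
Definition E a s := exp (W a s).
Definition dP a s := - w a s * P a s.

Lemma w_cont a : 0 <= a <= 1 -> forall s, continuity_pt (w a) s.
Proof. intros Ha s. unfold w. apply along_cont. apply traj_cont; auto. Qed.

Lemma w_0 a : 0 <= a <= 1 -> w a 0 = D 1 0 a 0.
Proof. intros Ha. unfold w. rewrite traj_0, clamp_id by lra. auto. Qed.

Lemma W_der a s : 0 <= a <= 1 -> derivable_pt_lim (W a) s (w a s).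
Proof. intros Ha. unfold W. apply RInt_derivable. apply w_cont; auto. Qed.

Lemma W_0 a : W a 0 = 0.
Proof. unfold W. rewrite RInt_point. reflexivity. Qed.

Lemma P_der a s : 0 <= a <= 1 -> derivable_pt_lim (P a) s (dP a s).
Proof.
  intros Ha. unfold dP, P.
  replace (- w a s * exp (- W a s)) with (exp (- W a s) * (- w a s)) by ring.
  apply (derivable_pt_lim_exp_comp (fun z => - W a z)). apply (derivable_pt_lim_opp (W a)). apply W_der; auto.
Qed.

Lemma P_pos a s : 0 < P a s.
Proof. apply exp_pos. Qed.

Lemma P_0 a : P a 0 = 1.
Proof. unfold P. rewrite W_0, Ropp_0. apply exp_0. Qed.

Lemma P_cont a s : 0 <= a <= 1 -> continuity_pt (P a) s.
Proof. intros Ha. apply derivable_pt_lim_continuous with (dP a s). apply P_der; auto. Qed.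

Lemma w_der a s : 0 <= a <= 1 -> 0 < s < t0 ->
  derivable_pt_lim (w a) s (w a s * w a s - 2 * energy s).
Proof.
  intros Ha Hs. unfold w. rewrite clamp_id by lra.
  destruct (traj_regular a s Ha ltac:(lra)) as [Gd _].
  destruct (pde_along (traj a s) s Gd ltac:(lra)) as [E0 _].
  replace (D 1 0 (traj a s) s * D 1 0 (traj a s) s - 2 * energy s) with
    (D 2 0 (traj a s) s * D 0 0 (traj a s) s + D 1 1 (traj a s) s) by lra.
  apply along_der; auto. apply traj_der; auto.
Qed.

Lemma dP_der a s : 0 <= a <= 1 -> 0 < s < t0 ->
  derivable_pt_lim (dP a) s (2 * energy s * P a s).
Proof.
  intros Ha Hs.
  apply (derivable_pt_lim_ext (fun z => - (w a z * P a z))); [intros; unfold dP; ring|].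
  replace (2 * energy s * P a s) with
    (- ((w a s * w a s - 2 * energy s) * P a s + w a s * (- w a s * P a s))) by ring.
  apply (derivable_pt_lim_opp (fun z => w a z * P a z)).
  apply (derivable_pt_lim_mult (w a) (P a)); [apply w_der; auto|apply P_der; auto].
Qed.

Lemma dP_cont a s : 0 <= a <= 1 -> continuity_pt (dP a) s.
Proof.
  intros Ha. apply (continuity_pt_mult (fun x => - w a x) (P a)).
  - apply (continuity_pt_opp (w a)). apply w_cont; auto.
  - apply P_cont; auto.
Qed.

Lemma uxx_along a s : 0 <= a <= 1 -> 0 <= s <= t0 ->
  D 2 0 (traj a s) (clamp 0 t0 s) * P a s = D 2 0 a 0.
Proof.
  intros Ha Hs.
  set (f := fun z => D 2 0 (traj a z) (clamp 0 t0 z) * P a z).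
  assert (E : f s = f 0).
  { apply (constant_of_deriv_zero f (fun _ => 0) 0 s); try lra.
    - intros z Hz. unfold f.
      destruct (traj_regular a z Ha ltac:(lra)) as [Gd _].
      destruct (pde_along (traj a z) z Gd ltac:(lra)) as [_ [E1 _]].
      assert (HD : derivable_pt_lim f z
        ((D 3 0 (traj a z) z * D 0 0 (traj a z) z + D 2 1 (traj a z) z) * P a z +
         D 2 0 (traj a z) (clamp 0 t0 z) * (- w a z * P a z))).
      { apply (derivable_pt_lim_mult (fun z => D 2 0 (traj a z) (clamp 0 t0 z)) (P a)).
        + apply along_der; [lra|]. apply traj_der; auto; lra.
        + apply P_der; auto. }
      replace ((D 3 0 (traj a z) z * D 0 0 (traj a z) z + D 2 1 (traj a z) z) * P a z +
         D 2 0 (traj a z) (clamp 0 t0 z) * (- w a z * P a z)) with 0 in HD; auto.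
      unfold w. rewrite clamp_id by lra.
      replace (D 3 0 (traj a z) z * D 0 0 (traj a z) z + D 2 1 (traj a z) z) with
             (D 1 0 (traj a z) z * D 2 0 (traj a z) z) by lra. ring.
    - intros; reflexivity.
    - intros z Hz. unfold f. apply (continuity_pt_mult (fun z => D 2 0 (traj a z) (clamp 0 t0 z)) (P a)).
      + apply along_cont. apply traj_cont; auto.
      + apply P_cont; auto. }
  unfold f in E. rewrite E, P_0, traj_0, clamp_id by lra. ring.
Qed.

Lemma uxxx_along_der a s : 0 <= a <= 1 -> 0 < s < t0 ->
  derivable_pt_lim (fun z => D 3 0 (traj a z) (clamp 0 t0 z)) s
    (D 2 0 (traj a s) s * D 2 0 (traj a s) s).
Proof.
  intros Ha Hs.
  destruct (traj_regular a s Ha ltac:(lra)) as [Gd _].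
  destruct (pde_along (traj a s) s Gd ltac:(lra)) as [_ [_ E2]].
  replace (D 2 0 (traj a s) s * D 2 0 (traj a s) s) with
    (D 4 0 (traj a s) s * D 0 0 (traj a s) s + D 3 1 (traj a s) s) by lra.
  apply along_der; auto. apply traj_der; auto.
Qed.

Lemma E_P a s : E a s = / P a s.
Proof. unfold E, P. rewrite exp_Ropp, Rinv_inv. auto. Qed.

Lemma E_der a s : 0 <= a <= 1 -> derivable_pt_lim (E a) s (E a s * w a s).
Proof. intros Ha. unfold E. apply (derivable_pt_lim_exp_comp (W a)). apply W_der; auto. Qed.

Lemma E_0 a : E a 0 = 1.
Proof. unfold E. rewrite W_0. apply exp_0. Qed.

Lemma E_cont a s : 0 <= a <= 1 -> continuity_pt (E a) s.
Proof. intros Ha. apply derivable_pt_lim_continuous with (E a s * w a s). apply E_der; auto. Qed.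

(* Growth factor of the Gronwall estimates on [0,t0]. *)
Definition C1 := exp ((2 * M + 1) * t0).

Lemma C1_ge1 : 1 <= C1.
Proof.
  unfold C1. assert (H : 0 <= (2 * M + 1) * t0) by nra.
  destruct H as [H|H].
  - pose proof (exp_increasing 0 _ H). rewrite exp_0 in H0. lra.
  - rewrite <- H, exp_0. lra.
Qed.

Lemma exp_le_C1 s : 0 <= s <= t0 -> exp ((2 * M + 1) * (s - 0)) <= C1.
Proof.
  intros Hs. unfold C1. destruct (Req_dec s t0) as [->|]; [rewrite Rminus_0_r; lra|].
  left. apply exp_increasing. apply Rmult_lt_compat_l; lra.
Qed.

Lemma traj_lipschitz a b s : 0 <= a <= 1 -> 0 <= b <= 1 -> 0 <= s <= t0 ->
  Rabs (traj b s - traj a s) <= Rabs (b - a) * C1.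
Proof.
  intros Ha Hb Hs.
  destruct (traj_gronwall (traj b) (traj a) s Hs) as [HU _].
  - apply traj_cont; auto.
  - apply traj_cont; auto.
  - intros; apply traj_der; auto; lra.
  - intros; apply traj_der; auto; lra.
  - intros z Hz. split; apply traj_regular; auto; lra.
  - rewrite !traj_0 in HU by auto. apply Rle_trans with (1 := HU).
    apply Rmult_le_compat_l; [apply Rabs_pos|]. apply exp_le_C1; auto.
Qed.

Definition lin_err a b s := traj b s - traj a s - (b - a) * E a s.

Lemma lin_err_cont a b s : 0 <= a <= 1 -> 0 <= b <= 1 -> continuity_pt (lin_err a b) s.
Proof.
  intros Ha Hb. unfold lin_err.
  apply (continuity_pt_minus (fun s => traj b s - traj a s) (fun s => (b - a) * E a s)).
  - apply continuity_pt_minus; apply traj_cont; auto.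
  - apply (continuity_pt_scal (E a)), E_cont; auto.
Qed.

Lemma lin_err_der a b s : 0 <= a <= 1 -> 0 <= b <= 1 -> 0 < s < t0 ->
  derivable_pt_lim (lin_err a b) s
    (D 0 0 (traj b s) s - D 0 0 (traj a s) s - (b - a) * (E a s * w a s)).
Proof.
  intros Ha Hb Hs. unfold lin_err.
  apply (derivable_pt_lim_minus (fun s => traj b s - traj a s) (fun s => (b - a) * E a s)).
  - apply derivable_pt_lim_minus; apply traj_der; auto.
  - apply (derivable_pt_lim_scal (E a)), E_der; auto.
Qed.

(* The
   error e satisfies  |e'| <= A0 + M |e|  with A0 small, so Gronwall applies. *)
Lemma flow_linearization a eps1 : 0 <= a <= 1 -> 0 < eps1 -> exists dU, 0 < dU /\
  forall b tau, 0 <= b <= 1 -> Rabs (b - a) * C1 < dU -> 0 <= tau <= t0 ->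
  Rabs (lin_err a b tau) <= eps1 * Rabs (b - a) * C1 * C1.
Proof.
  intros Ha He1.
  destruct (cont2_uniform_near_curve (D 1 0) T t0 (traj a) Ht0
     (fun y s Hs => D_cont 1 0 y s Hs) (traj_cont a Ha) eps1 He1) as [dU [HdU HU]].
  exists dU. split; auto. intros b tau Hb HbC Htau.
  pose proof C1_ge1 as HC1.
  set (A0 := eps1 * (Rabs (b - a) * C1)).
  assert (HA0 : 0 <= A0) by (unfold A0; pose proof (Rabs_pos (b - a)); apply Rmult_le_pos; nra).
  (* the slope of the error: mean value theorem and uniform continuity of u_x *)
  assert (Hdeb : forall s, 0 < s < tau ->
    Rabs (D 0 0 (traj b s) s - D 0 0 (traj a s) s - (b - a) * (E a s * w a s))
      <= A0 + M * Rabs (lin_err a b s)).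
  { intros s Hs.
    destruct (mean_value_between (fun y => D 0 0 y s) (fun y => D 1 0 y s)
       (traj a s) (traj b s)) as [c [Hc1 Hc2]].
    { intros; apply D_dx; lra. }
    assert (Hgd1 := traj_lipschitz a b s Ha Hb ltac:(lra)).
    assert (Hcg : Rabs (c - traj a s) < dU).
    { apply Rle_lt_trans with (Rabs (traj b s - traj a s)); [|lra].
      rewrite Rmin_comm, Rmax_comm in Hc1. apply Rabs_le_between_min_max; auto. }
    assert (HUc := HU s c ltac:(lra) Hcg).
    assert (Hwc : w a s = D 1 0 (traj a s) s) by (unfold w; rewrite clamp_id; auto; lra).
    assert (Hwb : Rabs (D 1 0 (traj a s) s) <= M).
    { apply HM; [apply traj_regular; auto; lra|lra]. }
    cbv beta in Hc2. rewrite Hc2, Hwc. unfold lin_err.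
    replace (D 1 0 c s * (traj b s - traj a s) - (b - a) * (E a s * D 1 0 (traj a s) s)) with
      ((D 1 0 c s - D 1 0 (traj a s) s) * (traj b s - traj a s)
       + D 1 0 (traj a s) s * (traj b s - traj a s - (b - a) * E a s)) by ring.
    eapply Rle_trans; [apply Rabs_triang|]. rewrite !Rabs_mult.
    apply Rplus_le_compat.
    - unfold A0. apply Rmult_le_compat; try apply Rabs_pos; lra.
    - apply Rmult_le_compat_r; [apply Rabs_pos|auto]. }
  assert (He0 : lin_err a b 0 = 0) by (unfold lin_err; rewrite !traj_0, E_0 by auto; ring).
  pose proof (gronwall_abs (lin_err a b) _ 0 tau A0 M ltac:(lra) HA0 ltac:(lra)
    (fun s _ => lin_err_cont a b s Ha Hb) (fun s Hs => lin_err_der a b s Ha Hb ltac:(lra)) Hdeb) as G.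
  rewrite He0, Rabs_R0, Rplus_0_l in G.
  apply Rle_trans with (1 := G).
  replace (eps1 * Rabs (b - a) * C1 * C1) with (A0 * C1) by (unfold A0; ring).
  apply Rmult_le_compat_l; [exact HA0|]. apply exp_le_C1; auto.
Qed.

Lemma gamma_alpha_derivative a tau : 0 <= a <= 1 -> 0 <= tau <= t0 ->
  deriv_within (fun b => 0 <= b <= 1) (fun b => gamma b tau) a (E a tau).
Proof.
  intros Ha Htau eps He.
  pose proof C1_ge1 as HC1.
  set (eps1 := eps / (2 * (C1 * C1))).
  assert (He1 : 0 < eps1) by (unfold eps1; apply Rdiv_lt_0_compat; nra).
  destruct (flow_linearization a eps1 Ha He1) as [dU [HdU HU]].
  exists (dU / C1). split; [apply Rdiv_lt_0_compat; lra|].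
  intros h Hh Hhd Hb. cbv beta in Hb.
  assert (Hh0 : 0 < Rabs h) by (apply Rabs_pos_lt; auto).
  assert (HhC : Rabs (a + h - a) * C1 < dU).
  { replace (a + h - a) with h by ring.
    apply Rmult_lt_reg_r with (/ C1). { apply Rinv_0_lt_compat; lra. }
    rewrite Rmult_assoc, Rinv_r by lra. rewrite Rmult_1_r. exact Hhd. }
  specialize (HU (a + h) tau Hb HhC Htau).
  unfold lin_err in HU. replace (a + h - a) with h in HU by ring.
  unfold traj in HU. rewrite !clamp_id in HU by lra.
  replace ((gamma (a + h) tau - gamma a tau) / h - E a tau)
    with ((gamma (a + h) tau - gamma a tau - h * E a tau) / h) by (field; auto).
  unfold Rdiv. rewrite Rabs_mult, Rabs_inv.
  apply Rle_lt_trans with (eps1 * Rabs h * C1 * C1 * / Rabs h).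
  { apply Rmult_le_compat_r; auto. left; apply Rinv_0_lt_compat; auto. }
  replace (eps1 * Rabs h * C1 * C1 * / Rabs h) with (eps / 2); [lra|].
  unfold eps1. field. split; lra.
Qed.

Lemma energy_bound s : 0 <= s <= t0 -> Rabs (energy s) <= M * M.
Proof.
  intros Hs. unfold energy.
  replace (M * M) with ((1 - 0) * (M * M)) by ring.
  apply abs_RInt_le_const; [lra| |].
  - apply ex_RInt_of_continuous. intros y. simpl.
    apply (continuity_pt_mult (fun y => D 1 0 y s) (fun y => D 1 0 y s * 1)).
    + apply derivable_pt_lim_continuous with (D 2 0 y s). apply D_dx; lra.
    + apply (continuity_pt_mult (fun y => D 1 0 y s) (fun _ => 1)); [|apply continuity_pt_cst].
      apply derivable_pt_lim_continuous with (D 2 0 y s). apply D_dx; lra.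
  - intros y Hy. assert (HR : InStrip y) by (intros _; lra).
    specialize (HM y s HR Hs). simpl. rewrite Rmult_1_r, Rabs_mult.
    apply Rmult_le_compat; try apply Rabs_pos; auto.
Qed.

(* Two labels with the same u0' have the same strain, and more generally the
   strain depends affinely on u0': differences of strains solve  z'' = 2 I z
   with zero Cauchy data. *)
Lemma P_affine a b1 b2 k : 0 <= a <= 1 -> 0 <= b1 <= 1 -> 0 <= b2 <= 1 ->
  D 1 0 a 0 = (1 - k) * D 1 0 b1 0 + k * D 1 0 b2 0 ->
  forall s, 0 <= s <= t0 -> P a s = (1 - k) * P b1 s + k * P b2 s.
Proof.
  intros Ha H1 H2 Hk s Hs.
  set (z := fun x => P a x - (1 - k) * P b1 x - k * P b2 x).
  set (dz := fun x => dP a x - (1 - k) * dP b1 x - k * dP b2 x).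
  assert (Z : z s = 0).
  { apply (second_order_linear_zero z dz energy s (M * M)); try lra.
    - apply Rmult_le_pos; lra.
    - intros x. apply derivable_pt_lim_comb; apply P_der; auto.
    - intros x. apply continuity_pt_comb; apply dP_cont; auto.
    - intros x Hx. replace (2 * energy x * z x) with
        (2 * energy x * P a x - (1 - k) * (2 * energy x * P b1 x) - k * (2 * energy x * P b2 x))
        by (unfold z; ring).
      apply derivable_pt_lim_comb; apply dP_der; auto; lra.
    - intros x Hx. apply energy_bound; lra.
    - unfold z. rewrite !P_0. ring.
    - unfold dz, dP. rewrite !P_0, !w_0 by auto. rewrite Hk. ring. }
  unfold z in Z. lra.
Qed.

(* Rolle: u0 takes the same value at 0 and 1 under both boundary conditions,
   so u0' vanishes somewhere in (0,1). *)
Lemma u0x_has_zero : exists xi, 0 < xi < 1 /\ D 1 0 xi 0 = 0.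
Proof.
  destruct (mean_value (fun y => D 0 0 y 0) (fun y => D 1 0 y 0) 0 1) as [c [Hc1 Hc2]]; [lra| | |].
  - intros; apply D_dx; lra.
  - intros; apply derivable_pt_lim_continuous with (D 1 0 x 0); apply D_dx; lra.
  - exists c; split; auto.
    assert (E : D 0 0 1 0 = D 0 0 0 0).
    { destruct (BC_cases bc) as [Ebc|Ebc].
      - replace 1 with (0 + 1) at 1 by ring. apply D_periodic; auto; lra.
      - pose proof Hbc as Hb. rewrite Ebc in Hb. simpl in Hb.
        destruct (Hb 0 ltac:(lra)) as [B0 B1]. rewrite !D_u, B0, B1. auto. }
    rewrite E in Hc2. lra.
Qed.

Lemma u0x_cont x : continuity_pt (fun y => D 1 0 y 0) x.
Proof. apply derivable_pt_lim_continuous with (D 2 0 x 0). apply D_dx; lra. Qed.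

Lemma u0x_clamp_cont x : continuity_pt (fun b => D 1 0 (clamp 0 1 b) 0) x.
Proof.
  apply (continuity_pt_comp (clamp 0 1) (fun y => D 1 0 y 0)); [apply clamp_cont; lra|apply u0x_cont].
Qed.

Lemma u0x_bound b : 0 <= b <= 1 -> Rabs (D 1 0 b 0) <= M.
Proof. intros Hb. apply HM; [intros _; lra|lra]. Qed.

(** Conservation of length:  int_0^1 gamma_alpha = gamma(1,s) - gamma(0,s) = 1.
    Stated for a strain of the affine form  P b s = y1 - u0'(b) y2,  which also
    provides the continuity in b of the integrand. *)

Lemma integral_inverse_P s y1 y2 : 0 <= s <= t0 ->
  (forall b, 0 <= b <= 1 -> P b s = y1 - D 1 0 b 0 * y2) ->
  RInt (fun b => / (y1 - D 1 0 (clamp 0 1 b) 0 * y2)) 0 1 = 1.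
Proof.
  intros Hs HP.
  set (h := fun b => / (y1 - D 1 0 (clamp 0 1 b) 0 * y2)).
  assert (Hden : forall b, y1 - D 1 0 (clamp 0 1 b) 0 * y2 = P (clamp 0 1 b) s).
  { intros b. rewrite HP; auto. apply clamp_in; lra. }
  assert (Hhc : forall b, continuity_pt h b).
  { intros b. unfold h. apply (continuity_pt_inv (fun b => y1 - D 1 0 (clamp 0 1 b) 0 * y2)).
    - apply (continuity_pt_minus (fun _ => y1) (fun b => D 1 0 (clamp 0 1 b) 0 * y2)); [apply continuity_pt_cst|].
      apply (continuity_pt_mult (fun b => D 1 0 (clamp 0 1 b) 0) (fun _ => y2));
        [apply u0x_clamp_cont|apply continuity_pt_cst].
    - rewrite Hden. apply Rgt_not_eq, P_pos. }
  set (Phi := fun b => gamma (clamp 0 1 b) s - RInt h 0 b).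
  assert (E1 : Phi 1 = Phi 0).
  { apply (constant_of_deriv_zero Phi (fun _ => 0) 0 1); try lra.
    - intros b Hb. unfold Phi.
      assert (HD : derivable_pt_lim Phi b (E b s - h b)).
      { apply (derivable_pt_lim_minus (fun b => gamma (clamp 0 1 b) s) (fun b => RInt h 0 b)).
        - apply (derivable_pt_lim_clamp_comp (fun b => gamma b s)); auto.
          apply (deriv_within_interior (fun b => 0 <= b <= 1) _ _ _ 0 1); auto.
          apply gamma_alpha_derivative; lra.
        - apply RInt_derivable; auto. }
      replace (E b s - h b) with 0 in HD; auto.
      unfold h. rewrite Hden, clamp_id by lra. rewrite E_P. ring.
    - intros; reflexivity.
    - intros b Hb. unfold Phi.
      apply (continuity_pt_minus (fun b => gamma (clamp 0 1 b) s) (fun b => RInt h 0 b)).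
      + apply (continuity_pt_clamp_comp (fun b => gamma b s) 0 1); [lra|].
        intros x Hx eps He.
        destruct (deriv_within_continuous _ _ _ _ (gamma_alpha_derivative x s Hx Hs) eps He) as [d [Hd H]].
        exists d; split; auto.
      + apply derivable_pt_lim_continuous with (h b). apply RInt_derivable; auto. }
  unfold Phi in E1. rewrite RInt_point in E1. rewrite !clamp_id in E1 by lra.
  pose proof (traj_span s Hs) as Hsp. unfold traj in Hsp. rewrite clamp_id in Hsp by lra.
  change (zero : R) with 0 in E1. fold h. lra.
Qed.

Definition Kf e := RInt (fun b => / (1 - e * D 1 0 (clamp 0 1 b) 0)) 0 1.

Lemma Kbar_Kf s : 0 <= s < T -> Kbar s = Kf (eta s).
Proof.
  intros Hs. rewrite <- (RInt_of_Rint _ _ _ _ (HK s Hs)). unfold Kf.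
  apply RInt_ext. intros x Hx. rewrite Rmin_left, Rmax_right in Hx by lra.
  rewrite clamp_id by lra. auto.
Qed.

Lemma Kf_integrand_cont e : (forall b, 0 <= b <= 1 -> 1 - e * D 1 0 b 0 <> 0) ->
  forall x, continuity_pt (fun b => / (1 - e * D 1 0 (clamp 0 1 b) 0)) x.
Proof.
  intros Hne x. apply (continuity_pt_inv (fun b => 1 - e * D 1 0 (clamp 0 1 b) 0)).
  - apply (continuity_pt_minus (fun _ => 1) (fun b => e * D 1 0 (clamp 0 1 b) 0)); [apply continuity_pt_cst|].
    apply (continuity_pt_mult (fun _ => e) (fun b => D 1 0 (clamp 0 1 b) 0));
      [apply continuity_pt_cst|apply u0x_clamp_cont].
  - apply Hne. apply clamp_in; lra.
Qed.

Lemma Kf_bounds e lo hi : 0 < lo -> (forall b, 0 <= b <= 1 -> lo <= 1 - e * D 1 0 b 0 <= hi) ->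
  / hi <= Kf e <= / lo.
Proof.
  intros Hlo Hb.
  assert (Hne : forall b, 0 <= b <= 1 -> 1 - e * D 1 0 b 0 <> 0)
    by (intros b Hb'; specialize (Hb b Hb'); lra).
  assert (Hex : ex_RInt (fun b => / (1 - e * D 1 0 (clamp 0 1 b) 0)) 0 1)
    by (apply ex_RInt_of_continuous, Kf_integrand_cont; auto).
  unfold Kf. split.
  - rewrite <- (RInt_const01 (/ hi)). apply RInt_le;
      [lra|apply ex_RInt_of_continuous; intros; apply continuity_pt_cst|auto|].
    intros x Hx. specialize (Hb (clamp 0 1 x) (clamp_in 0 1 x ltac:(lra))).
    apply Rinv_le_contravar; lra.
  - rewrite <- (RInt_const01 (/ lo)). apply RInt_le;
      [lra|auto|apply ex_RInt_of_continuous; intros; apply continuity_pt_cst|].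
    intros x Hx. specialize (Hb (clamp 0 1 x) (clamp_in 0 1 x ltac:(lra))).
    apply Rinv_le_contravar; lra.
Qed.

Lemma Kf_lipschitz e1 e2 m : 0 < m ->
  (forall b, 0 <= b <= 1 -> m <= 1 - e1 * D 1 0 b 0) ->
  (forall b, 0 <= b <= 1 -> m <= 1 - e2 * D 1 0 b 0) ->
  Rabs (Kf e1 - Kf e2) <= M / (m * m) * Rabs (e1 - e2).
Proof.
  intros Hm H1 H2.
  assert (Hex1 : ex_RInt (fun b => / (1 - e1 * D 1 0 (clamp 0 1 b) 0)) 0 1)
    by (apply ex_RInt_of_continuous, Kf_integrand_cont; intros b Hb; specialize (H1 b Hb); lra).
  assert (Hex2 : ex_RInt (fun b => / (1 - e2 * D 1 0 (clamp 0 1 b) 0)) 0 1)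
    by (apply ex_RInt_of_continuous, Kf_integrand_cont; intros b Hb; specialize (H2 b Hb); lra).
  unfold Kf. change (RInt (fun b => / (1 - e1 * D 1 0 (clamp 0 1 b) 0)) 0 1 -
    RInt (fun b => / (1 - e2 * D 1 0 (clamp 0 1 b) 0)) 0 1) with
    (minus (RInt (fun b => / (1 - e1 * D 1 0 (clamp 0 1 b) 0)) 0 1)
      (RInt (fun b => / (1 - e2 * D 1 0 (clamp 0 1 b) 0)) 0 1)).
  rewrite <- RInt_minus by auto.
  replace (M / (m * m) * Rabs (e1 - e2)) with ((1 - 0) * (M / (m * m) * Rabs (e1 - e2))) by ring.
  apply abs_RInt_le_const; [lra| |].
  - apply ex_RInt_minus; auto.
  - intros x Hx. set (c := D 1 0 (clamp 0 1 x) 0).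
    assert (Hc : 0 <= clamp 0 1 x <= 1) by (apply clamp_in; lra).
    specialize (H1 _ Hc). specialize (H2 _ Hc). fold c in H1, H2.
    assert (Hcb : Rabs c <= M) by (apply u0x_bound; auto).
    change (minus (/ (1 - e1 * c)) (/ (1 - e2 * c))) with (/ (1 - e1 * c) - / (1 - e2 * c)).
    replace (/ (1 - e1 * c) - / (1 - e2 * c)) with
      ((e1 - e2) * c / ((1 - e1 * c) * (1 - e2 * c))) by (field; lra).
    unfold Rdiv. rewrite !Rabs_mult, Rabs_inv, Rabs_mult.
    rewrite (Rabs_right (1 - e1 * c)), (Rabs_right (1 - e2 * c)) by lra.
    assert (m * m <= (1 - e1 * c) * (1 - e2 * c)) by (apply Rmult_le_compat; lra).
    assert (Hi : / ((1 - e1 * c) * (1 - e2 * c)) <= / (m * m))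
      by (apply Rinv_le_contravar; [nra|lra]).
    assert (0 <= / ((1 - e1 * c) * (1 - e2 * c))) by (left; apply Rinv_0_lt_compat; nra).
    pose proof (Rabs_pos (e1 - e2)). pose proof (Rabs_pos c).
    apply Rle_trans with (Rabs (e1 - e2) * M * / (m * m)).
    + apply Rmult_le_compat; [apply Rmult_le_pos; auto|auto|apply Rmult_le_compat_l; auto|auto].
    + right. ring.
Qed.

Lemma inv_Kf_sq_lipschitz e1 e2 lo hi : 0 < lo ->
  (forall b, 0 <= b <= 1 -> lo <= 1 - e1 * D 1 0 b 0 <= hi) ->
  (forall b, 0 <= b <= 1 -> lo <= 1 - e2 * D 1 0 b 0 <= hi) ->
  Rabs (/ (Kf e1) ^ 2 - / (Kf e2) ^ 2) <=
    (M / (lo * lo) * (2 / lo) * (hi * hi * (hi * hi))) * Rabs (e1 - e2).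
Proof.
  intros Hlo H1 H2.
  assert (Hhi : lo <= hi) by (destruct (H1 0 ltac:(lra)); lra).
  destruct (Kf_bounds e1 lo hi Hlo H1) as [K1l K1u].
  destruct (Kf_bounds e2 lo hi Hlo H2) as [K2l K2u].
  pose proof (Kf_lipschitz e1 e2 lo Hlo ltac:(intros b Hb; apply H1; auto)
    ltac:(intros b Hb; apply H2; auto)) as HL.
  set (K1 := Kf e1) in *. set (K2 := Kf e2) in *.
  assert (Hih : 0 < / hi) by (apply Rinv_0_lt_compat; lra).
  assert (P1 : 0 < K1) by lra. assert (P2 : 0 < K2) by lra.
  replace (/ K1 ^ 2 - / K2 ^ 2) with ((K2 - K1) * (K2 + K1) * (/ (K1 * K2) * / (K1 * K2))).
  2: { field. split; lra. }
  rewrite !Rabs_mult. rewrite (Rabs_right (K2 + K1)) by lra.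
  rewrite (Rabs_right (/ (K1 * K2))) by (left; apply Rinv_0_lt_compat; nra).
  rewrite (Rabs_minus_sym K2 K1).
  assert (HI : / (K1 * K2) <= hi * hi).
  { rewrite <- (Rinv_inv (hi * hi)). apply Rinv_le_contravar; [apply Rinv_0_lt_compat; nra|].
    rewrite Rinv_mult. apply Rmult_le_compat; lra. }
  assert (HS : K2 + K1 <= 2 / lo) by (unfold Rdiv; lra).
  assert (0 <= / (K1 * K2)) by (left; apply Rinv_0_lt_compat; nra).
  pose proof (Rabs_pos (K1 - K2)). pose proof (Rabs_pos (e1 - e2)).
  assert (0 <= M / (lo * lo)) by (apply Rdiv_le_0_compat; nra).
  assert (HC : / (K1 * K2) * / (K1 * K2) <= hi * hi * (hi * hi)) by (apply Rmult_le_compat; auto).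
  assert (HA : Rabs (K1 - K2) <= M / (lo * lo) * Rabs (e1 - e2)) by exact HL.
  apply Rle_trans with (M / (lo * lo) * Rabs (e1 - e2) * (2 / lo) * (hi * hi * (hi * hi))).
  - apply Rmult_le_compat.
    + apply Rmult_le_pos; lra.
    + apply Rmult_le_pos; auto.
    + apply Rmult_le_compat; lra.
    + auto.
  - right. ring.
Qed.

Lemma rhs_locally_lipschitz e0 : (forall b, 0 <= b <= 1 -> 0 < 1 - e0 * D 1 0 b 0) ->
  exists rho Lc, 0 < rho /\ 0 <= Lc /\ forall e1 e2,
    Rabs (e1 - e0) < rho -> Rabs (e2 - e0) < rho ->
    Rabs (/ (Kf e1) ^ 2 - / (Kf e2) ^ 2) <= Lc * Rabs (e1 - e2).
Proof.
  intros Hpos.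
  destruct (continuity_ab_min (fun b => 1 - e0 * D 1 0 b 0) 0 1) as [mb [Hmb1 Hmb2]]; [lra| |].
  { intros b _. apply (continuity_pt_minus (fun _ => 1) (fun b => e0 * D 1 0 b 0));
      [apply continuity_pt_cst|].
    apply (continuity_pt_mult (fun _ => e0) (fun b => D 1 0 b 0));
      [apply continuity_pt_cst|apply u0x_cont]. }
  set (m := 1 - e0 * D 1 0 mb 0).
  assert (Hm : 0 < m) by (apply Hpos; auto).
  set (rho := m / (2 * M)).
  assert (Hrho : 0 < rho) by (apply Rdiv_lt_0_compat; lra).
  set (hi := 1 + (Rabs e0 + rho) * M).
  assert (Hmarg : forall e b, Rabs (e - e0) < rho -> 0 <= b <= 1 ->
      m / 2 <= 1 - e * D 1 0 b 0 <= hi).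
  { intros e b He Hb. specialize (Hmb1 b Hb). cbv beta in Hmb1.
    pose proof (u0x_bound b Hb) as Hcb.
    assert (H1 : Rabs ((e - e0) * D 1 0 b 0) <= rho * M)
      by (rewrite Rabs_mult; apply Rmult_le_compat; auto; try apply Rabs_pos; lra).
    assert (rho * M = m / 2) by (unfold rho; field; lra).
    assert (H2 : Rabs (e * D 1 0 b 0) <= (Rabs e0 + rho) * M).
    { rewrite Rabs_mult. apply Rmult_le_compat; auto; try apply Rabs_pos.
      replace e with (e0 + (e - e0)) by ring.
      eapply Rle_trans; [apply Rabs_triang|]. lra. }
    apply Rabs_le_between in H1. apply Rabs_le_between in H2. fold m in Hmb1. unfold hi. lra. }
  assert (Hhi : 0 < hi) by (unfold hi; pose proof (Rabs_pos e0); nra).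
  exists rho, (M / (m / 2 * (m / 2)) * (2 / (m / 2)) * (hi * hi * (hi * hi))).
  split; [auto|split].
  - apply Rmult_le_pos; [apply Rmult_le_pos|]; [apply Rdiv_le_0_compat; nra|
      apply Rdiv_le_0_compat; lra| nra].
  - intros e1 e2 H1 H2. apply inv_Kf_sq_lipschitz; [lra| |]; intros b Hb; apply Hmarg; auto.
Qed.

(** The degenerate case  u0' = 0  on [0,1]: then P = 1, Kbar = 1. *)

Lemma P_factor_flat (HA : forall b, 0 <= b <= 1 -> D 1 0 b 0 = 0) a s : 0 <= a <= 1 -> 0 <= s <= t0 ->
  P a s = Kbar s * (1 - eta s * D 1 0 a 0) /\ 0 < Kbar s.
Proof.
  intros Ha Hs. destruct u0x_has_zero as [xi [Hxi Hxi0]].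
  assert (Hall : forall b, 0 <= b <= 1 -> P b s = P xi s - D 1 0 b 0 * 0).
  { intros b Hb. rewrite Rmult_0_r, Rminus_0_r.
    rewrite (P_affine b xi xi 0); auto; try lra.
    rewrite HA, Hxi0; auto. ring. }
  pose proof (integral_inverse_P s (P xi s) 0 Hs Hall) as HI.
  rewrite (RInt_ext _ (fun _ => / P xi s)) in HI.
  2: { intros x _. rewrite Rmult_0_r, Rminus_0_r. auto. }
  rewrite RInt_const01 in HI.
  assert (HP1 : P xi s = 1).
  { pose proof (P_pos xi s). rewrite <- (Rinv_inv (P xi s)), HI. apply Rinv_1. }
  assert (HK1 : Kbar s = 1).
  { rewrite Kbar_Kf by lra. unfold Kf.
    rewrite (RInt_ext _ (fun _ => 1)). { apply RInt_const01. }
    intros x Hx. rewrite Rmin_left, Rmax_right in Hx by lra.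
    rewrite HA by (apply clamp_in; lra). rewrite Rmult_0_r, Rminus_0_r. apply Rinv_1. }
  rewrite Hall, HP1, HK1, HA by auto. split; [ring|lra].
Qed.

Definition etc s := eta (clamp 0 t0 s).

Lemma etc_cont s : continuity_pt etc s.
Proof.
  unfold etc. apply (continuity_pt_clamp_comp eta 0 t0); [lra|].
  intros x Hx eps He.
  destruct (deriv_within_continuous _ _ _ _ (Hetad x ltac:(lra)) eps He) as [d [Hd H]].
  exists d; split; auto. intros y Hy Hyx. apply H; auto. lra.
Qed.

Lemma etc_der s : 0 < s < t0 -> derivable_pt_lim etc s (/ (Kbar s) ^ 2).
Proof.
  intros Hs. unfold etc. apply derivable_pt_lim_clamp_comp; auto.
  apply (deriv_within_interior (fun z => 0 <= z < T) _ _ _ 0 t0); [intros; lra|lra|].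
  apply Hetad; lra.
Qed.

(** The generic case.  Pick xi with u0'(xi) = 0 and a2 with u0'(a2) <> 0; the
    fundamental solutions of  y'' = 2 I y  are then  y1 = P xi  and
    y2 = (P xi - P a2) / u0'(a2). *)
Section Generic.
Variables xi a2 : R.
Hypothesis Hxi : 0 <= xi <= 1.
Hypothesis Hxi0 : D 1 0 xi 0 = 0.
Hypothesis Ha2 : 0 <= a2 <= 1.
Hypothesis Hc2 : D 1 0 a2 0 <> 0.

Definition y1 s := P xi s.
Definition y2 s := (P xi s - P a2 s) / D 1 0 a2 0.
Definition dy1 s := dP xi s.
Definition dy2 s := (dP xi s - dP a2 s) / D 1 0 a2 0.

Lemma y1_der s : derivable_pt_lim y1 s (dy1 s).
Proof. apply P_der; auto. Qed.

Lemma y2_der s : derivable_pt_lim y2 s (dy2 s).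
Proof.
  unfold y2, dy2, Rdiv.
  replace ((dP xi s - dP a2 s) * / D 1 0 a2 0) with
    ((dP xi s - dP a2 s) * / D 1 0 a2 0 + (P xi s - P a2 s) * 0) by ring.
  apply (derivable_pt_lim_mult (fun s => P xi s - P a2 s) (fun _ => / D 1 0 a2 0));
    [|apply derivable_pt_lim_const].
  apply (derivable_pt_lim_minus (P xi) (P a2)); apply P_der; auto.
Qed.

Lemma dy1_der s : 0 < s < t0 -> derivable_pt_lim dy1 s (2 * energy s * y1 s).
Proof. intros Hs. apply dP_der; auto. Qed.

Lemma dy2_der s : 0 < s < t0 -> derivable_pt_lim dy2 s (2 * energy s * y2 s).
Proof.
  intros Hs. unfold y2, dy2, Rdiv.
  replace (2 * energy s * ((P xi s - P a2 s) * / D 1 0 a2 0)) with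
    ((2 * energy s * P xi s - 2 * energy s * P a2 s) * / D 1 0 a2 0 +
     (dP xi s - dP a2 s) * 0) by ring.
  apply (derivable_pt_lim_mult (fun s => dP xi s - dP a2 s) (fun _ => / D 1 0 a2 0));
    [|apply derivable_pt_lim_const].
  apply (derivable_pt_lim_minus (dP xi) (dP a2)); apply dP_der; auto.
Qed.

Lemma dy1_cont s : continuity_pt dy1 s.
Proof. apply dP_cont; auto. Qed.

Lemma dy2_cont s : continuity_pt dy2 s.
Proof.
  unfold dy2. apply (continuity_pt_mult (fun s => dP xi s - dP a2 s) (fun _ => / D 1 0 a2 0));
    [|apply continuity_pt_cst].
  apply (continuity_pt_minus (dP xi) (dP a2)); apply dP_cont; auto.
Qed.

Lemma y1_cont s : continuity_pt y1 s.
Proof. apply derivable_pt_lim_continuous with (dy1 s). apply y1_der. Qed.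
Lemma y2_cont s : continuity_pt y2 s.
Proof. apply derivable_pt_lim_continuous with (dy2 s). apply y2_der. Qed.
Lemma y1_pos s : 0 < y1 s.
Proof. apply P_pos. Qed.

Lemma P_linear a s : 0 <= a <= 1 -> 0 <= s <= t0 -> P a s = y1 s - D 1 0 a 0 * y2 s.
Proof.
  intros Ha Hs. rewrite (P_affine a xi a2 (D 1 0 a 0 / D 1 0 a2 0)); auto.
  - unfold y1, y2. field. auto.
  - rewrite Hxi0. field. auto.
Qed.

Lemma wronskian_one s : 0 <= s <= t0 -> y1 s * dy2 s - dy1 s * y2 s = 1.
Proof.
  intros Hs.
  assert (E : (fun z => y1 z * dy2 z - dy1 z * y2 z) s = (fun z => y1 z * dy2 z - dy1 z * y2 z) 0).
  { apply (constant_of_deriv_zero (fun z => y1 z * dy2 z - dy1 z * y2 z) (fun _ => 0) 0 s); try lra.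
    - intros z Hz.
      assert (HD : derivable_pt_lim (fun z => y1 z * dy2 z - dy1 z * y2 z) z
        ((dy1 z * dy2 z + y1 z * (2 * energy z * y2 z)) - (2 * energy z * y1 z * y2 z + dy1 z * dy2 z))).
      { apply (derivable_pt_lim_minus (fun z => y1 z * dy2 z) (fun z => dy1 z * y2 z)).
        - apply (derivable_pt_lim_mult y1 dy2); [apply y1_der|apply dy2_der; lra].
        - apply (derivable_pt_lim_mult dy1 y2); [apply dy1_der; lra|apply y2_der]. }
      replace ((dy1 z * dy2 z + y1 z * (2 * energy z * y2 z)) - (2 * energy z * y1 z * y2 z + dy1 z * dy2 z))
        with 0 in HD by ring. exact HD.
    - intros; reflexivity.
    - intros z _. apply (continuity_pt_minus (fun z => y1 z * dy2 z) (fun z => dy1 z * y2 z)).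
      + apply (continuity_pt_mult y1 dy2); [apply y1_cont|apply dy2_cont].
      + apply (continuity_pt_mult dy1 y2); [apply dy1_cont|apply y2_cont]. }
  cbv beta in E. rewrite E. unfold y1, y2, dy1, dy2. unfold dP. rewrite !P_0, !w_0 by auto.
  rewrite Hxi0. field. auto.
Qed.

(* The candidate for eta. *)
Definition et s := y2 s / y1 s.

(* et' = (y1 y2' - y1' y2) / y1^2 = 1 / y1^2. *)
Lemma et_der s : 0 <= s <= t0 -> derivable_pt_lim et s (/ (y1 s) ^ 2).
Proof.
  intros Hs. unfold et.
  assert (HD := derivable_pt_lim_div y2 y1 s (dy2 s) (dy1 s) (y2_der s) (y1_der s)
     (Rgt_not_eq _ _ (y1_pos s))).
  replace (/ y1 s ^ 2) with ((dy2 s * y1 s - dy1 s * y2 s) / (y1 s)²); auto.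
  replace (dy2 s * y1 s - dy1 s * y2 s) with 1 by (rewrite <- (wronskian_one s Hs); ring).
  unfold Rsqr. pose proof (y1_pos s). field. lra.
Qed.

Lemma et_cont s : continuity_pt et s.
Proof.
  unfold et. apply (continuity_pt_div y2 y1); [apply y2_cont|apply y1_cont|].
  apply Rgt_not_eq, y1_pos.
Qed.

Lemma et_margin s b : 0 <= s <= t0 -> 0 <= b <= 1 -> 1 - et s * D 1 0 b 0 = P b s / y1 s.
Proof.
  intros Hs Hb. rewrite P_linear by auto. unfold et. pose proof (y1_pos s). field. lra.
Qed.

Lemma et_margin_pos s b : 0 <= s <= t0 -> 0 <= b <= 1 -> 0 < 1 - et s * D 1 0 b 0.
Proof.
  intros Hs Hb. rewrite et_margin by auto. apply Rdiv_lt_0_compat; [apply P_pos|apply y1_pos].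
Qed.

(* Conservation of length identifies  Kbar(et) = y1,  so et solves the eta-equation. *)
Lemma Kf_et s : 0 <= s <= t0 -> Kf (et s) = y1 s.
Proof.
  intros Hs.
  pose proof (integral_inverse_P s (y1 s) (y2 s) Hs (fun b Hb => P_linear b s Hb Hs)) as HI.
  assert (Hden : forall x, y1 s - D 1 0 (clamp 0 1 x) 0 * y2 s = P (clamp 0 1 x) s).
  { intros x. rewrite P_linear; auto. apply clamp_in; lra. }
  assert (Hex : ex_RInt (fun b => / (y1 s - D 1 0 (clamp 0 1 b) 0 * y2 s)) 0 1).
  { apply ex_RInt_of_continuous. intros x.
    apply (continuity_pt_inv (fun b => y1 s - D 1 0 (clamp 0 1 b) 0 * y2 s)).
    - apply (continuity_pt_minus (fun _ => y1 s) (fun b => D 1 0 (clamp 0 1 b) 0 * y2 s)); [apply continuity_pt_cst|].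
      apply (continuity_pt_mult (fun b => D 1 0 (clamp 0 1 b) 0) (fun _ => y2 s));
        [apply u0x_clamp_cont|apply continuity_pt_cst].
    - rewrite Hden. apply Rgt_not_eq, P_pos. }
  unfold Kf. rewrite (RInt_ext _ (fun b => scal (y1 s) (/ (y1 s - D 1 0 (clamp 0 1 b) 0 * y2 s)))).
  - rewrite (@RInt_scal R_CompleteNormedModule) by auto. rewrite HI.
    unfold scal; simpl. unfold mult; simpl. ring.
  - intros x _. unfold scal; simpl. unfold mult; simpl.
    assert (H0 := Hden x). pose proof (P_pos (clamp 0 1 x) s). pose proof (y1_pos s).
    unfold et. field. split; [|lra].
    replace (y1 s - D 1 0 (clamp 0 1 x) 0 * y2 s) with (P (clamp 0 1 x) s) by auto. lra.
Qed.

(* The solution eta of  eta' = 1/Kbar^2, eta 0 = 0  coincides with et: both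
   solve the same locally Lipschitz ODE with the same initial value, and the
   continuation argument propagates the equality along [0,t0]. *)
Lemma eta_eq s : 0 <= s <= t0 -> eta s = et s.
Proof.
  revert s. apply (real_induction 0 t0); [lra|].
  intros c Hc IH.
  assert (Pc : etc c = et c).
  { destruct (Req_dec c 0) as [->|Hne].
    - unfold etc. rewrite clamp_id, Heta0 by lra. unfold et, y1, y2.
      rewrite !P_0. field. auto.
    - assert (H := bounds_at_left_limit (fun s => etc s - et s) c 0 0).
      assert (0 <= etc c - et c <= 0); [|lra].
      apply H; [|lra|].
      + apply (continuity_pt_minus etc et); [apply etc_cont|apply et_cont].
      + intros s Hs. unfold etc. rewrite clamp_id by lra. rewrite IH by lra. lra. }
  destruct (rhs_locally_lipschitz (et c) (fun b Hb => et_margin_pos c b Hc Hb))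
    as [rho [Lc [Hrho [HLc Hlip]]]].
  destruct (continuity_pt_elim etc c (etc_cont c) rho Hrho) as [r1 [Hr1 H1]].
  destruct (continuity_pt_elim et c (et_cont c) rho Hrho) as [r2 [Hr2 H2]].
  exists (Rmin r1 r2). split; [apply Rmin_pos; auto|].
  intros s Hs Hst.
  assert (Hm1 : Rmin r1 r2 <= r1) by apply Rmin_l.
  assert (Hm2 : Rmin r1 r2 <= r2) by apply Rmin_r.
  set (d := fun z => etc z - et z).
  assert (G : Rabs (d s) <= (Rabs (d c) + 0) * exp ((2 * Lc + 1) * (s - c))).
  { apply (gronwall_abs d (fun z => / (Kbar z) ^ 2 - / (y1 z) ^ 2)); try lra.
    - intros z _. apply (continuity_pt_minus etc et); [apply etc_cont|apply et_cont].
    - intros z Hz. apply (derivable_pt_lim_minus etc et); [apply etc_der|apply et_der]; lra.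
    - intros z Hz.
      assert (Ez : etc z = eta z) by (unfold etc; rewrite clamp_id; auto; lra).
      assert (Hz1 : Rabs (eta z - et c) < rho)
        by (rewrite <- Ez, <- Pc; apply H1; apply Rabs_def1; lra).
      assert (Hz2 : Rabs (et z - et c) < rho) by (apply H2; apply Rabs_def1; lra).
      rewrite Kbar_Kf, <- (Kf_et z) by lra. unfold d. rewrite Ez, Rplus_0_l.
      apply Hlip; auto. }
  unfold d in G. rewrite Pc, Rminus_diag, Rabs_R0, Rplus_0_l, Rmult_0_l in G.
  apply Rabs_le_between in G. unfold etc in G. rewrite clamp_id in G by lra. lra.
Qed.

Lemma P_factor_generic a s : 0 <= a <= 1 -> 0 <= s <= t0 ->
  P a s = Kbar s * (1 - eta s * D 1 0 a 0) /\ 0 < Kbar s.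
Proof.
  intros Ha Hs. rewrite Kbar_Kf, eta_eq, Kf_et by lra. split.
  - rewrite P_linear by auto. unfold et. pose proof (y1_pos s). field. lra.
  - apply y1_pos.
Qed.

End Generic.

Lemma P_factorization a s : 0 <= a <= 1 -> 0 <= s <= t0 ->
  P a s = Kbar s * (1 - eta s * D 1 0 a 0) /\ 0 < Kbar s.
Proof.
  intros Ha Hs. destruct u0x_has_zero as [xi [Hxi Hxi0]].
  destruct (classic (exists a2, 0 <= a2 <= 1 /\ D 1 0 a2 0 <> 0)) as [[a2 [Ha2 Hc2]]|HN].
  - apply (P_factor_generic xi a2); auto; lra.
  - apply P_factor_flat; auto. intros b Hb. apply NNPP. intros Hne. apply HN. exists b; auto.
Qed.

Lemma J_pos a s : 0 <= a <= 1 -> 0 <= s <= t0 -> 0 < 1 - eta s * D 1 0 a 0.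
Proof.
  intros Ha Hs. destruct (P_factorization a s Ha Hs) as [E1 E2]. pose proof (P_pos a s).
  rewrite E1 in H. apply (Rmult_lt_reg_l (Kbar s)); auto. lra.
Qed.

Lemma uxx_closed_form a s : 0 <= a <= 1 -> 0 <= s <= t0 ->
  D 2 0 (traj a s) s = D 2 0 a 0 / (Kbar s * (1 - eta s * D 1 0 a 0)).
Proof.
  intros Ha Hs. destruct (P_factorization a s Ha Hs) as [EP HKb].
  pose proof (uxx_along a s Ha Hs) as HU. rewrite clamp_id in HU by lra.
  pose proof (P_pos a s). pose proof (J_pos a s Ha Hs).
  rewrite <- HU, <- EP. field. lra.
Qed.

Definition Jc a s := 1 - etc s * D 1 0 a 0.

Lemma Jc_pos a s : 0 <= a <= 1 -> 0 < Jc a s.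
Proof. intros Ha. unfold Jc, etc. apply J_pos; auto. apply clamp_in; lra. Qed.

(* (eta / J)' = eta' / J^2 = 1 / (Kbar J)^2, since  J + eta u0' = 1. *)
Lemma eta_over_J_der a s : 0 <= a <= 1 -> 0 < s < t0 ->
  derivable_pt_lim (fun z => etc z / Jc a z) s (/ (Kbar s * Jc a s) ^ 2).
Proof.
  intros Ha Hs. set (c := D 1 0 a 0).
  assert (HD := derivable_pt_lim_div etc (Jc a) s _ (0 - (/ Kbar s ^ 2 * c + etc s * 0))
    (etc_der s Hs)).
  replace (/ (Kbar s * Jc a s) ^ 2) with
    ((/ Kbar s ^ 2 * Jc a s - (0 - (/ Kbar s ^ 2 * c + etc s * 0)) * etc s) / (Jc a s)²).
  - apply HD; [|apply Rgt_not_eq, Jc_pos; auto].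
    unfold Jc. apply (derivable_pt_lim_minus (fun _ => 1) (fun s => etc s * c));
      [apply derivable_pt_lim_const|].
    apply (derivable_pt_lim_mult etc (fun _ => c)); [apply etc_der; auto|apply derivable_pt_lim_const].
  - destruct (P_factorization a s Ha ltac:(lra)) as [_ HKb]. pose proof (Jc_pos a s Ha).
    unfold Jc, c in *. unfold Rsqr. field. lra.
Qed.

(* u_xxx(gamma(a,t0),t0) = u0_xxx(a) + eta u0''(a)^2 / J:  the difference
   u_xxx - u0''^2 eta/J  has derivative  u_xx^2 - u0''^2 / (Kbar J)^2 = 0. *)
Lemma uxxx_along a : 0 <= a <= 1 ->
  D 3 0 (gamma a t0) t0 = D 3 0 a 0 + eta t0 * (D 2 0 a 0) ^ 2 / (1 - eta t0 * D 1 0 a 0).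
Proof.
  intros Ha. set (q := D 2 0 a 0).
  set (Z := fun s => D 3 0 (traj a s) (clamp 0 t0 s) - q ^ 2 * (etc s / Jc a s)).
  assert (EZ : Z t0 = Z 0).
  { apply (constant_of_deriv_zero Z (fun _ => 0) 0 t0); try lra.
    - intros s Hs.
      assert (HD : derivable_pt_lim Z s
        (D 2 0 (traj a s) s * D 2 0 (traj a s) s - (0 * (etc s / Jc a s) +
         q ^ 2 * / (Kbar s * Jc a s) ^ 2))).
      { apply (derivable_pt_lim_minus (fun s => D 3 0 (traj a s) (clamp 0 t0 s))
          (fun s => q ^ 2 * (etc s / Jc a s))); [apply uxxx_along_der; auto|].
        apply (derivable_pt_lim_mult (fun _ => q ^ 2) (fun s => etc s / Jc a s));
          [apply derivable_pt_lim_const|apply eta_over_J_der; auto]. }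
      replace 0 with (D 2 0 (traj a s) s * D 2 0 (traj a s) s - (0 * (etc s / Jc a s) +
         q ^ 2 * / (Kbar s * Jc a s) ^ 2)); auto.
      assert (EJ : Jc a s = 1 - eta s * D 1 0 a 0) by (unfold Jc, etc; rewrite clamp_id; auto; lra).
      destruct (P_factorization a s Ha ltac:(lra)) as [_ HKb]. pose proof (J_pos a s Ha ltac:(lra)).
      rewrite uxx_closed_form, EJ by lra. unfold q. field. lra.
    - intros; reflexivity.
    - intros s _. unfold Z.
      apply (continuity_pt_minus (fun s => D 3 0 (traj a s) (clamp 0 t0 s))
        (fun s => q ^ 2 * (etc s / Jc a s))); [apply along_cont, traj_cont; auto|].
      apply (continuity_pt_mult (fun _ => q ^ 2) (fun s => etc s / Jc a s));
        [apply continuity_pt_cst|].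
      apply (continuity_pt_div etc (Jc a)); [apply etc_cont| |apply Rgt_not_eq, Jc_pos; auto].
      unfold Jc. apply (continuity_pt_minus (fun _ => 1) (fun s => etc s * _));
        [apply continuity_pt_cst|].
      apply (continuity_pt_mult etc (fun _ => _)); [apply etc_cont|apply continuity_pt_cst]. }
  unfold Z, Jc, etc in EZ. rewrite traj_0, !clamp_id, Heta0 in EZ by lra.
  unfold traj in EZ. rewrite clamp_id in EZ by lra.
  pose proof (J_pos a t0 Ha ltac:(lra)).
  replace (q ^ 2 * (0 / (1 - 0 * D 1 0 a 0))) with 0 in EZ by (unfold Rdiv; ring).
  unfold q in *. apply (Rplus_eq_reg_r (- (D 2 0 a 0 ^ 2 * (eta t0 / (1 - eta t0 * D 1 0 a 0))))).
  unfold Rdiv in *. lra.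
Qed.

Lemma main_at_time a : 0 <= a <= 1 ->
    let J := 1 - eta t0 * D 1%nat 0%nat a 0 in
    (exists ga,
       deriv_within (fun b => 0 <= b <= 1) (fun b => gamma b t0) a ga /\
       D 2%nat 0%nat (gamma a t0) t0 = D 2%nat 0%nat a 0 * ga /\
       D 2%nat 0%nat a 0 * ga = D 2%nat 0%nat a 0 / J * / Kbar t0) /\
    D 3%nat 0%nat (gamma a t0) t0
      = D 3%nat 0%nat a 0 + eta t0 * (D 2%nat 0%nat a 0) ^ 2 / J /\
    (0 < D 2%nat 0%nat (gamma a t0) t0 <-> 0 < D 2%nat 0%nat a 0) /\
    (D 2%nat 0%nat (gamma a t0) t0 < 0 <-> D 2%nat 0%nat a 0 < 0).
Proof.
  intros Ha J.
  assert (Ht : 0 <= t0 <= t0) by lra.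
  destruct (P_factorization a t0 Ha Ht) as [EP HKb].
  pose proof (J_pos a t0 Ha Ht) as HJ. fold J in HJ, EP.
  pose proof (P_pos a t0) as HP.
  assert (Huxx : D 2 0 (gamma a t0) t0 = D 2 0 a 0 * E a t0).
  { pose proof (uxx_along a t0 Ha Ht) as HU. unfold traj in HU. rewrite clamp_id in HU by lra.
    rewrite E_P, <- HU. field. lra. }
  assert (HE : 0 < E a t0) by apply exp_pos.
  split; [|split; [apply uxxx_along; auto|split]].
  - exists (E a t0). split; [apply gamma_alpha_derivative; auto|]. split; auto.
    rewrite E_P, EP. field. split; lra.
  - rewrite Huxx. split; intros H; [|nra].
    destruct (Rle_dec (D 2 0 a 0) 0); [nra|lra].
  - rewrite Huxx. split; intros H; [|nra].
    destruct (Rle_dec 0 (D 2 0 a 0)); [nra|lra].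
Qed.

End Concavity.

Theorem mainTheorem4
  (bc : BC) (T : R) (u : R -> R -> R) (D : nat -> nat -> R -> R -> R)
  (gamma : R -> R -> R) (eta Kbar : R -> R) :
  0 < T ->
  smooth_derivs T u D ->
  bc_holds bc T u ->
  (* the PDE  u_xt + u u_xx - u_x^2 = -2 int_0^1 u_x^2 dx  on [0,1] x [0,T) *)
  (forall x t, 0 <= x <= 1 -> 0 <= t < T ->
     exists I, Rint (fun y => (D 1%nat 0%nat y t) ^ 2) 0 1 I /\
       D 1%nat 1%nat x t + u x t * D 2%nat 0%nat x t - (D 1%nat 0%nat x t) ^ 2
         = -2 * I) ->
  (* Lagrangian flow *)
  (forall a, 0 <= a <= 1 -> gamma a 0 = a) ->
  (forall a t, 0 <= a <= 1 -> 0 <= t < T ->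
     deriv_within (fun s => 0 <= s < T) (fun s => gamma a s) t
       (u (gamma a t) t)) ->
  (* Kbar(t) = int_0^1 1/J(b,t) db,  J(b,t) = 1 - eta(t) u_0'(b) *)
  (forall t, 0 <= t < T ->
     Rint (fun b => / (1 - eta t * D 1%nat 0%nat b 0)) 0 1 (Kbar t)) ->
  eta 0 = 0 ->
  (forall t, 0 <= t < T ->
     deriv_within (fun s => 0 <= s < T) eta t (/ (Kbar t) ^ 2)) ->
  forall t a, 0 <= t < T -> 0 <= a <= 1 ->
    let J := 1 - eta t * D 1%nat 0%nat a 0 in
    (exists ga,
       deriv_within (fun b => 0 <= b <= 1) (fun b => gamma b t) a ga /\
       D 2%nat 0%nat (gamma a t) t = D 2%nat 0%nat a 0 * ga /\
       D 2%nat 0%nat a 0 * ga = D 2%nat 0%nat a 0 / J * / Kbar t) /\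
    D 3%nat 0%nat (gamma a t) t
      = D 3%nat 0%nat a 0 + eta t * (D 2%nat 0%nat a 0) ^ 2 / J /\
    (0 < D 2%nat 0%nat (gamma a t) t <-> 0 < D 2%nat 0%nat a 0) /\
    (D 2%nat 0%nat (gamma a t) t < 0 <-> D 2%nat 0%nat a 0 < 0).
Proof.
  intros HT Hsm Hbc Hpde Hg0 Hgd HK Heta0 Hetad t a Ht Ha.
  destruct (D_bounded bc T u D Hsm Hbc t Ht 1 0) as [M [HM0 HM]].
  exact (main_at_time bc T u D gamma eta Kbar HT Hsm Hbc Hpde Hg0 Hgd HK Heta0 Hetad
           t Ht M HM0 HM a Ha).
Qed.
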